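(* Let $\mathcal H_1,\mathcal H_2$ be real Hilbert spaces, $\chi\in]0,+\infty[$, $\boldsymbol f\in\Gamma_0(\mathcal H_1\oplus\mathcal H_2)$, and let $\boldsymbol{\mathcal L}:\mathcal H_1\oplus\mathcal H_2\to\mathbb R$ be differentiable with $\chi$-Lipschitzian gradient, such that $\boldsymbol{\mathcal L}(x_1,\cdot)$ is concave for every $x_1\in\mathcal H_1$ and $\boldsymbol{\mathcal L}(\cdot,x_2)$ is convex for every $x_2\in\mathcal H_2$. Suppose there exists $(z_1,z_2)$ with $\big(-\nabla_1\boldsymbol{\mathcal L}(z_1,z_2),\nabla_2\boldsymbol{\mathcal L}(z_1,z_2)\big)\in\partial\boldsymbol f(z_1,z_2)$. Let $\varepsilon\in]0,1/(\chi+1)[$, let $(\gamma_n)_{n\in\mathbb N}$ be a sequence in $[\varepsilon,(1-\varepsilon)/\chi]$, let $(x_{1,0},x_{2,0})\in\mathcal H_1\oplus\mathcal H_2$, and for $i\in\{1,2\}$ let $(a_{i,n})_n,(b_{i,n})_n,(c_{i,n})_n$ be absolutely summable sequences in $\mathcal H_i$. For every $n$ define $y_{1,n}=x_{1,n}-\gamma_n(\nabla_1\boldsymbol{\mathcal L}(x_{1,n},x_{2,n})+a_{1,n})$, $y_{2,n}=x_{2,n}+\gamma_n(\nabla_2\boldsymbol{\mathcal L}(x_{1,n},x_{2,n})+a_{2,n})$, $(p_{1,n},p_{2,n})=\operatorname{prox}_{\gamma_n\boldsymbol f}(y_{1,n},y_{2,n})+(b_{1,n},b_{2,n})$, $q_{1,n}=p_{1,n}-\gamma_n(\nabla_1\boldsymbol{\mathcal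 L}(p_{1,n},p_{2,n})+c_{1,n})$, $q_{2,n}=p_{2,n}+\gamma_n(\nabla_2\boldsymbol{\mathcal L}(p_{1,n},p_{2,n})+c_{2,n})$, $x_{1,n+1}=x_{1,n}-y_{1,n}+q_{1,n}$, $x_{2,n+1}=x_{2,n}-y_{2,n}+q_{2,n}$. Then there exist $(\overline x_1,\overline x_2)$ with $\overline x_1\in\operatorname{Argmin}_{x\in\mathcal H_1}\big(\boldsymbol f(x,\overline x_2)+\boldsymbol{\mathcal L}(x,\overline x_2)\big)$ and $\overline x_2\in\operatorname{Argmin}_{x\in\mathcal H_2}\big(\boldsymbol f(\overline x_1,x)-\boldsymbol{\mathcal L}(\overline x_1,x)\big)$, such that $x_{1,n}\rightharpoonup\overline x_1$, $p_{1,n}\rightharpoonup\overline x_1$, $x_{2,n}\rightharpoonup\overline x_2$, $p_{2,n}\rightharpoonup\overline x_2$.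
   Context: $\Gamma_0(\mathcal K)$ denotes the proper lower semicontinuous convex functions $\mathcal K\to\left]-\infty,+\infty\right]$; $\partial$ denotes the subdifferential; $\mathcal H_1\oplus\mathcal H_2$ is the product Hilbert space with inner product $\langle x_1,y_1\rangle+\langle x_2,y_2\rangle$. $\nabla_i\boldsymbol{\mathcal L}(x_1,x_2)$ is the partial gradient with respect to the $i$-th variable. For $\varphi\in\Gamma_0(\mathcal K)$, $\operatorname{prox}_\varphi x=\operatorname{argmin}_y\big(\varphi(y)+\tfrac12\|x-y\|^2\big)$. $\rightharpoonup$ denotes weak convergence. *)

From Stdlib Require Import Reals Lra.
Open Scope R_scope.

Record IPS := {
  car :> Type;
  vzero : car;
  vadd : car -> car -> car;
  vopp : car -> car;
  vscal : R -> car -> car;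
  inner : car -> car -> R;
  vadd_assoc : forall x y z, vadd x (vadd y z) = vadd (vadd x y) z;
  vadd_comm : forall x y, vadd x y = vadd y x;
  vadd_0 : forall x, vadd x vzero = x;
  vadd_opp : forall x, vadd x (vopp x) = vzero;
  vscal_1 : forall x, vscal 1 x = x;
  vscal_assoc : forall a b x, vscal a (vscal b x) = vscal (a * b) x;
  vscal_distr_v : forall a x y, vscal a (vadd x y) = vadd (vscal a x) (vscal a y);
  vscal_distr_s : forall a b x, vscal (a + b) x = vadd (vscal a x) (vscal b x);
  inner_sym : forall x y, inner x y = inner y x;
  inner_add_l : forall x y z, inner (vadd x y) z = inner x z + inner y z;
  inner_scal_l : forall a x y, inner (vscal a x) y = a * inner x y;
  inner_pos : forall x, 0 <= inner x x;
  inner_def : forall x, inner x x = 0 -> x = vzero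
}.

Arguments vzero {_}.
Arguments vadd {_} _ _.
Arguments vopp {_} _.
Arguments vscal {_} _ _.
Arguments inner {_} _ _.

Definition vsub {E : IPS} (x y : E) : E := vadd x (vopp y).
Definition norm {E : IPS} (x : E) : R := sqrt (inner x x).

Definition strong_cv {E : IPS} (u : nat -> E) (l : E) : Prop :=
  Un_cv (fun n => norm (vsub (u n) l)) 0.
Definition weak_cv {E : IPS} (u : nat -> E) (l : E) : Prop :=
  forall y : E, Un_cv (fun n => inner (u n) y) (inner l y).

Definition complete (E : IPS) : Prop :=
  forall u : nat -> E,
    (forall eps, 0 < eps -> exists N, forall m n, (N <= m)%nat -> (N <= n)%nat ->
        norm (vsub (u m) (u n)) < eps) ->
    exists l, strong_cv u l.

Record Hilbert := { hips :> IPS; hcomplete : complete hips }.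

Definition pinner {E F : IPS} (x y : E * F) : R := inner (fst x) (fst y) + inner (snd x) (snd y).

Definition prodIPS (E F : IPS) : IPS.
Proof.
refine {| car := (E * F)%type;
  vzero := (vzero, vzero);
  vadd := fun x y => (vadd (fst x) (fst y), vadd (snd x) (snd y));
  vopp := fun x => (vopp (fst x), vopp (snd x));
  vscal := fun a x => (vscal a (fst x), vscal a (snd x));
  inner := pinner |}.
- intros; simpl; now rewrite !vadd_assoc.
- intros; simpl; now rewrite (vadd_comm _ (fst x)), (vadd_comm _ (snd x)).
- intros [x1 x2]; simpl; now rewrite !vadd_0.
- intros; simpl; now rewrite !vadd_opp.
- intros [x1 x2]; simpl; now rewrite !vscal_1.
- intros; simpl; now rewrite !vscal_assoc.
- intros; simpl; now rewrite !vscal_distr_v.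
- intros; simpl; now rewrite !vscal_distr_s.
- intros; unfold pinner; now rewrite (inner_sym _ (fst x)), (inner_sym _ (snd x)).
- intros; unfold pinner; simpl; rewrite !inner_add_l; ring.
- intros; unfold pinner; simpl; rewrite !inner_scal_l; ring.
- intros; unfold pinner; simpl; pose proof (inner_pos _ (fst x)); pose proof (inner_pos _ (snd x)); lra.
- intros [x1 x2] H; unfold pinner in H; simpl in H.
  pose proof (inner_pos _ x1); pose proof (inner_pos _ x2).
  rewrite (inner_def _ x1), (inner_def _ x2); auto; lra.
Defined.

Inductive ereal := Fin (r : R) | PInf.

Definition ele (a b : ereal) : Prop :=
  match a, b with
  | _, PInf => True
  | PInf, Fin _ => False
  | Fin x, Fin y => x <= y
  end.

Definition eaddr (a : ereal) (r : R) : ereal :=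
  match a with Fin x => Fin (x + r) | PInf => PInf end.

(** scaling by a positive real *)
Definition escal (g : R) (a : ereal) : ereal :=
  match a with Fin x => Fin (g * x) | PInf => PInf end.

Definition ecomb (t : R) (a b : ereal) : ereal :=
  match a, b with Fin x, Fin y => Fin (t * x + (1 - t) * y) | _, _ => PInf end.

Definition proper {E : IPS} (f : E -> ereal) : Prop := exists x, f x <> PInf.

Definition convex_fun {E : IPS} (f : E -> ereal) : Prop :=
  forall (x y : E) t, 0 < t < 1 ->
    ele (f (vadd (vscal t x) (vscal (1 - t) y))) (ecomb t (f x) (f y)).

Definition lsc {E : IPS} (f : E -> ereal) : Prop :=
  forall (r : R) (u : nat -> E) (x : E),
    strong_cv u x -> (forall n, ele (f (u n)) (Fin r)) -> ele (f x) (Fin r).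

Definition Gamma0 {E : IPS} (f : E -> ereal) : Prop :=
  proper f /\ convex_fun f /\ lsc f.

Definition subdiff {E : IPS} (f : E -> ereal) (x u : E) : Prop :=
  f x <> PInf /\
  forall y : E, ele (eaddr (f x) (inner (vsub y x) u)) (f y).

Definition is_prox {E : IPS} (g : R) (f : E -> ereal) (y p : E) : Prop :=
  forall q : E,
    ele (eaddr (escal g (f p)) (/2 * (norm (vsub y p)) ^ 2))
        (eaddr (escal g (f q)) (/2 * (norm (vsub y q)) ^ 2)).

Definition convex_real {E : IPS} (h : E -> R) : Prop :=
  forall (x y : E) t, 0 < t < 1 ->
    h (vadd (vscal t x) (vscal (1 - t) y)) <= t * h x + (1 - t) * h y.

Definition is_gradient {E : IPS} (L : E -> R) (G : E -> E) : Prop :=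
  forall x : E, forall eps, 0 < eps -> exists delta, 0 < delta /\
    forall h : E, norm h < delta ->
      Rabs (L (vadd x h) - L x - inner (G x) h) <= eps * norm h.

Definition lipschitz {E F : IPS} (k : R) (T : E -> F) : Prop :=
  forall x y : E, norm (vsub (T x) (T y)) <= k * norm (vsub x y).

Definition abs_summable {E : IPS} (a : nat -> E) : Prop :=
  exists l, Un_cv (fun N => sum_f_R0 (fun n => norm (a n)) N) l.

(** The saddle problem is recast as a monotone inclusion in the
    product Hilbert space H = H1 (+) H2:  find x with -B x in the
    subdifferential of f, where B (x1, x2) = (grad_1 L, - grad_2 L) (x1, x2).
    Convexity of L in x1 and concavity in x2 make B monotone, and B is
    chi-Lipschitz because grad L is.  The iteration of the statement is then
    exactly Tseng's scheme  y = x - g (B x + a),  r = prox_{g f} y,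
    x+ = x - y + (r + b - g (B (r + b) + c))  in H. *)

From Stdlib Require Import Reals Lra Lia Psatz Classical ClassicalEpsilon.
Open Scope R_scope.

Arguments vadd_assoc {_}. Arguments vadd_comm {_}. Arguments vadd_0 {_}.
Arguments vadd_opp {_}. Arguments vscal_1 {_}. Arguments vscal_assoc {_}.
Arguments vscal_distr_v {_}. Arguments vscal_distr_s {_}. Arguments inner_sym {_}.
Arguments inner_add_l {_}. Arguments inner_scal_l {_}. Arguments inner_pos {_}.
Arguments inner_def {_}.

(** * Inner product spaces *)

Section InnerAlgebra.
Context {E : IPS}.
Implicit Types x y z u v w : E.

Lemma vadd_0_l x : vadd vzero x = x.
Proof. rewrite vadd_comm; apply vadd_0. Qed.

Lemma inner_zero_l y : inner (@vzero E) y = 0.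
Proof.
  assert (H : inner (@vzero E) y = inner (@vzero E) y + inner (@vzero E) y).
  { rewrite <- inner_add_l, vadd_0; reflexivity. }
  lra.
Qed.

Lemma inner_zero_r y : inner y (@vzero E) = 0.
Proof. rewrite inner_sym; apply inner_zero_l. Qed.

Lemma inner_opp_l x y : inner (vopp x) y = - inner x y.
Proof.
  assert (H : inner (vadd x (vopp x)) y = 0) by (rewrite vadd_opp; apply inner_zero_l).
  rewrite inner_add_l in H; lra.
Qed.

Lemma inner_add_r x y z : inner x (vadd y z) = inner x y + inner x z.
Proof. rewrite inner_sym, inner_add_l, (inner_sym y), (inner_sym z); reflexivity. Qed.

Lemma inner_scal_r a x y : inner x (vscal a y) = a * inner x y.
Proof. rewrite inner_sym, inner_scal_l, inner_sym; reflexivity. Qed.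

Lemma inner_opp_r x y : inner x (vopp y) = - inner x y.
Proof. rewrite inner_sym, inner_opp_l, inner_sym; reflexivity. Qed.

Lemma inner_sub_l x y z : inner (vsub x y) z = inner x z - inner y z.
Proof. unfold vsub; rewrite inner_add_l, inner_opp_l; ring. Qed.

Lemma inner_sub_r x y z : inner z (vsub x y) = inner z x - inner z y.
Proof. unfold vsub; rewrite inner_add_r, inner_opp_r; ring. Qed.

Lemma vsub_eq0 u v : vsub u v = vzero -> u = v.
Proof.
  intro H. unfold vsub in H.
  rewrite <- (vadd_0 u), <- (vadd_opp v), (vadd_comm v), vadd_assoc, H, vadd_0_l.
  reflexivity.
Qed.

(** Vectors are determined by their inner products; this reduces every
    vector identity to a real identity. *)
Lemma vec_ext u v : (forall w, inner u w = inner v w) -> u = v.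
Proof. intro H. apply vsub_eq0, inner_def. rewrite inner_sub_l, H; ring. Qed.

End InnerAlgebra.

(** [inner_simpl] expands inner products by bilinearity; [vec_eq] proves a
    vector identity by testing it against an arbitrary vector. *)
Ltac inner_simpl := repeat (rewrite ?inner_add_l, ?inner_scal_l, ?inner_opp_l,
  ?inner_sub_l, ?inner_zero_l, ?inner_add_r, ?inner_scal_r, ?inner_opp_r,
  ?inner_sub_r, ?inner_zero_r).
Ltac inner_simpl_in H := repeat (rewrite ?inner_add_l, ?inner_scal_l, ?inner_opp_l,
  ?inner_sub_l, ?inner_zero_l, ?inner_add_r, ?inner_scal_r, ?inner_opp_r,
  ?inner_sub_r, ?inner_zero_r in H).
Ltac vec_eq := apply vec_ext; let w := fresh "w" in intro w; inner_simpl; ring.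

Section Norms.
Context {E : IPS}.
Implicit Types x y z u v w : E.

Lemma norm_sq x : norm x ^ 2 = inner x x.
Proof. unfold norm; simpl; rewrite Rmult_1_r; apply sqrt_sqrt, inner_pos. Qed.

Lemma norm_mul_self x : norm x * norm x = inner x x.
Proof. rewrite <- norm_sq; ring. Qed.

Lemma norm_pos x : 0 <= norm x.
Proof. apply sqrt_pos. Qed.

Lemma norm_zero : norm (@vzero E) = 0.
Proof. unfold norm; rewrite inner_zero_l; apply sqrt_0. Qed.

Lemma norm_le_sq x r : 0 <= r -> inner x x <= r * r -> norm x <= r.
Proof.
  intros Hr H. unfold norm. rewrite <- (sqrt_square r) by lra.
  apply sqrt_le_1_alt; lra.
Qed.

Lemma cauchy_schwarz_sq x y : inner x y ^ 2 <= inner x x * inner y y.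
Proof.
  destruct (Req_dec (inner y y) 0) as [H0|H0].
  - apply inner_def in H0; subst y. rewrite !inner_zero_r. nra.
  - pose proof (inner_pos y) as Hy.
    (* the quadratic t |-> |x + t y|^2 is nonnegative; evaluate at its minimizer *)
    set (t := - inner x y / inner y y).
    assert (Hq : 0 <= inner x x - inner x y ^ 2 / inner y y).
    { replace (inner x x - inner x y ^ 2 / inner y y)
        with (inner (vadd x (vscal t y)) (vadd x (vscal t y))) by
        (inner_simpl; rewrite (inner_sym y x); unfold t; field; lra).
      apply inner_pos. }
    apply Rmult_le_reg_r with (/ inner y y); [apply Rinv_0_lt_compat; lra|].
    replace (inner x x * inner y y * / inner y y) with (inner x x) by (field; lra).
    unfold Rdiv in Hq. lra.
Qed.

Lemma cauchy_schwarz x y : Rabs (inner x y) <= norm x * norm y.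
Proof.
  pose proof (cauchy_schwarz_sq x y) as H.
  pose proof (norm_pos x). pose proof (norm_pos y).
  rewrite <- norm_mul_self, <- (norm_mul_self y) in H.
  apply Rle_trans with (Rabs (norm x * norm y)).
  - apply Rsqr_le_abs_0; unfold Rsqr; nra.
  - rewrite Rabs_pos_eq by nra; lra.
Qed.

Lemma cauchy_schwarz_le x y : inner x y <= norm x * norm y.
Proof. pose proof (cauchy_schwarz x y). pose proof (Rle_abs (inner x y)). lra. Qed.

Lemma norm_triangle x y : norm (vadd x y) <= norm x + norm y.
Proof.
  pose proof (norm_pos x). pose proof (norm_pos y).
  apply norm_le_sq; [lra|]. inner_simpl. rewrite (inner_sym y x).
  pose proof (cauchy_schwarz_le x y). rewrite <- norm_mul_self, <- (norm_mul_self y). nra.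
Qed.

Lemma norm_scal a x : norm (vscal a x) = Rabs a * norm x.
Proof.
  unfold norm. inner_simpl. rewrite <- Rmult_assoc, sqrt_mult.
  - rewrite <- sqrt_Rsqr_abs; reflexivity.
  - nra.
  - apply inner_pos.
Qed.

Lemma norm_opp x : norm (vopp x) = norm x.
Proof. unfold norm; inner_simpl; f_equal; ring. Qed.

Lemma norm_sub_sym x y : norm (vsub x y) = norm (vsub y x).
Proof. unfold norm; inner_simpl; rewrite (inner_sym x y); f_equal; ring. Qed.

Lemma norm_sub_triangle x y : norm (vsub x y) <= norm x + norm y.
Proof. unfold vsub; rewrite <- (norm_opp y); apply norm_triangle. Qed.

Lemma dist_triangle x y z : norm (vsub x z) <= norm (vsub x y) + norm (vsub y z).
Proof.
  replace (vsub x z) with (vadd (vsub x y) (vsub y z)) by vec_eq.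
  apply norm_triangle.
Qed.

Lemma inner_self_sub x y :
  inner (vsub x y) (vsub x y) = inner x x - 2 * inner x y + inner y y.
Proof. inner_simpl; rewrite (inner_sym y x); ring. Qed.

End Norms.

(** * Real sequences *)

Lemma cv_ext (u v : nat -> R) l : (forall n, u n = v n) -> Un_cv u l -> Un_cv v l.
Proof.
  intros H Hu e He; destruct (Hu e He) as [N HN]; exists N; intros n Hn.
  rewrite <- H; auto.
Qed.

Lemma cv_const c : Un_cv (fun _ => c) c.
Proof.
  intros e He; exists 0%nat; intros; unfold R_dist.
  rewrite Rminus_diag, Rabs_R0; lra.
Qed.

Lemma cv_scal (u : nat -> R) l c : Un_cv u l -> Un_cv (fun n => c * u n) (c * l).
Proof. intro H; apply CV_mult; [apply cv_const | exact H]. Qed.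

Lemma lim_ge (u : nat -> R) l a N :
  (forall n, (N <= n)%nat -> a <= u n) -> Un_cv u l -> a <= l.
Proof.
  intros H Hu. destruct (Rle_lt_dec a l) as [|Hlt]; [auto|].
  destruct (Hu (a - l)) as [M HM]; [lra|].
  specialize (HM (max N M) ltac:(lia)). specialize (H (max N M) ltac:(lia)).
  unfold R_dist in HM. apply Rabs_def2 in HM. lra.
Qed.

Lemma lim_le (u : nat -> R) l a N :
  (forall n, (N <= n)%nat -> u n <= a) -> Un_cv u l -> l <= a.
Proof.
  intros H Hu.
  assert (- a <= - l); [|lra].
  apply (lim_ge (fun n => - u n) _ _ N); [intros n Hn; specialize (H n Hn); lra|].
  apply CV_opp; exact Hu.
Qed.

Lemma lim_le_lim (u v : nat -> R) l1 l2 N :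
  (forall n, (N <= n)%nat -> u n <= v n) -> Un_cv u l1 -> Un_cv v l2 -> l1 <= l2.
Proof.
  intros H Hu Hv. assert (0 <= l2 - l1); [|lra].
  apply (lim_ge (fun n => v n - u n) _ _ N); [intros n Hn; specialize (H n Hn); lra|].
  apply CV_minus; auto.
Qed.

Lemma squeeze (u v w : nat -> R) l N :
  (forall n, (N <= n)%nat -> u n <= v n <= w n) ->
  Un_cv u l -> Un_cv w l -> Un_cv v l.
Proof.
  intros H Hu Hw e He. destruct (Hu e He) as [N1 H1]. destruct (Hw e He) as [N2 H2].
  exists (max N (max N1 N2)). intros n Hn.
  specialize (H n ltac:(lia)). specialize (H1 n ltac:(lia)). specialize (H2 n ltac:(lia)).
  unfold R_dist in *. apply Rabs_def2 in H1. apply Rabs_def2 in H2. apply Rabs_def1; lra.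
Qed.

Lemma cv0_dominated (u v : nat -> R) N :
  (forall n, (N <= n)%nat -> Rabs (u n) <= v n) -> Un_cv v 0 -> Un_cv u 0.
Proof.
  intros H Hv e He. destruct (Hv e He) as [M HM]. exists (max N M). intros n Hn.
  specialize (H n ltac:(lia)). specialize (HM n ltac:(lia)).
  unfold R_dist in *. rewrite Rminus_0_r in *.
  pose proof (Rle_abs (v n)). lra.
Qed.

Lemma cv0_sqrt (r : nat -> R) :
  (forall n, 0 <= r n) -> Un_cv (fun n => r n * r n) 0 -> Un_cv r 0.
Proof.
  intros Hp H e He. destruct (H (e * e) ltac:(nra)) as [N HN]. exists N. intros n Hn.
  specialize (HN n Hn). specialize (Hp n). unfold R_dist in *. rewrite Rminus_0_r in *.
  rewrite Rabs_pos_eq in * by nra. nra.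
Qed.

Lemma cv_shift (u : nat -> R) l : Un_cv u l -> Un_cv (fun n => u (S n)) l.
Proof. intros H e He. destruct (H e He) as [N HN]. exists N. intros n Hn. apply HN; lia. Qed.

Lemma cv_unshift_n (u : nat -> R) N l : Un_cv (fun k => u (k + N)%nat) l -> Un_cv u l.
Proof.
  intros H e He. destruct (H e He) as [K HK]. exists (K + N)%nat. intros n Hn.
  replace n with ((n - N) + N)%nat by lia. apply HK; lia.
Qed.

Lemma cv_sub_index (u : nat -> R) (tau : nat -> nat) l :
  (forall k, (k <= tau k)%nat) -> Un_cv u l -> Un_cv (fun k => u (tau k)) l.
Proof.
  intros Ht H e He. destruct (H e He) as [N HN]. exists N. intros n Hn.
  apply HN. specialize (Ht n); lia.
Qed.

Lemma cv_bounded (u : nat -> R) l : Un_cv u l -> exists M, forall n, Rabs (u n) <= M.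
Proof.
  intro H. destruct (H 1 ltac:(lra)) as [N HN].
  assert (Hb : forall m, exists M, forall n, (n <= m)%nat -> Rabs (u n) <= M).
  { induction m as [|m [M HM]].
    - exists (Rabs (u 0%nat)). intros n Hn. replace n with 0%nat by lia. lra.
    - exists (Rmax M (Rabs (u (S m)))). intros n Hn. destruct (Nat.eq_dec n (S m)).
      + subst; apply Rmax_r.
      + eapply Rle_trans; [apply HM; lia| apply Rmax_l]. }
  destruct (Hb N) as [M HM]. exists (Rmax M (Rabs l + 1)). intros n.
  destruct (Nat.le_gt_cases n N).
  - eapply Rle_trans; [apply HM; auto|apply Rmax_l].
  - eapply Rle_trans; [|apply Rmax_r]. specialize (HN n ltac:(lia)). unfold R_dist in HN.
    pose proof (Rabs_triang_inv (u n) l). lra.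
Qed.

Lemma inv_succ_small e : 0 < e -> exists N, forall n, (N <= n)%nat -> / (INR n + 1) < e.
Proof.
  intro He. destruct (archimed_cor1 e He) as [N [HN HN0]]. exists N. intros n Hn.
  apply Rle_lt_trans with (/ INR N); auto.
  apply Rinv_le_contravar; [apply lt_0_INR; lia|].
  apply le_INR in Hn. lra.
Qed.

Lemma cv_inv_succ : Un_cv (fun n => / (INR n + 1)) 0.
Proof.
  intros e He. destruct (inv_succ_small e He) as [N HN]. exists N. intros n Hn.
  unfold R_dist. rewrite Rminus_0_r, Rabs_pos_eq by
    (left; apply Rinv_0_lt_compat; pose proof (pos_INR n); lra).
  apply HN; auto.
Qed.

Definition summable (e : nat -> R) : Prop := exists l, Un_cv (sum_f_R0 e) l.

Lemma summable_plus e1 e2 : summable e1 -> summable e2 -> summable (fun n => e1 n + e2 n).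
Proof.
  intros [l1 H1] [l2 H2]. exists (l1 + l2).
  apply (cv_ext (fun N => sum_f_R0 e1 N + sum_f_R0 e2 N)); [intro; rewrite plus_sum; auto|].
  apply CV_plus; auto.
Qed.

Lemma summable_scal e c : summable e -> summable (fun n => c * e n).
Proof.
  intros [l H]. exists (c * l).
  apply (cv_ext (fun N => c * sum_f_R0 e N)).
  - intro N. rewrite scal_sum. apply sum_eq. intros; ring.
  - apply cv_scal; auto.
Qed.

Lemma summable_le (e e' : nat -> R) :
  (forall n, 0 <= e n <= e' n) -> summable e' -> summable e.
Proof.
  intros H [l Hl].
  assert (Hg : Un_growing (sum_f_R0 e)) by (intro n; simpl; specialize (H (S n)); lra).
  assert (Hb : forall n, sum_f_R0 e n <= l).
  { intro n. apply Rle_trans with (sum_f_R0 e' n).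
    - apply sum_Rle. intros; apply H.
    - apply growing_ineq; auto. intro k; simpl; specialize (H (S k)); lra. }
  destruct (growing_cv _ Hg) as [l' Hl'].
  - exists l. intros x [n ->]. apply Hb.
  - exists l'; auto.
Qed.

Lemma summable_terms e : summable e -> Un_cv e 0.
Proof.
  intros [l H]. apply (cv_unshift_n _ 1).
  apply (cv_ext (fun n => sum_f_R0 e (S n) - sum_f_R0 e n));
    [intro; rewrite Nat.add_1_r; simpl; ring|].
  replace 0 with (l - l) by ring. apply CV_minus; auto. apply cv_shift; auto.
Qed.

Lemma quasi_fejer_cv (al e : nat -> R) :
  (forall n, 0 <= al n) -> (forall n, 0 <= e n) -> summable e ->
  (forall n, al (S n) <= al n + e n) -> exists l, Un_cv al l.
Proof.
  intros Ha He [Se HS] Hf.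
  set (be := fun n => al (S n) - sum_f_R0 e n).
  assert (Hd : Un_decreasing be) by (intro n; unfold be; simpl; specialize (Hf (S n)); lra).
  assert (Hl : has_lb be).
  { exists Se. intros x [n Hn]. rewrite Hn. unfold opp_seq, be.
    assert (sum_f_R0 e n <= Se)
      by (apply growing_ineq; auto; intro k; simpl; specialize (He (S k)); lra).
    specialize (Ha (S n)). lra. }
  destruct (decreasing_cv be Hd Hl) as [l' Hl'].
  exists (l' + Se). apply (cv_unshift_n _ 1).
  apply (cv_ext (fun n => be n + sum_f_R0 e n)); [intro; unfold be; rewrite Nat.add_1_r; ring|].
  apply CV_plus; auto.
Qed.

Definition sincr (phi : nat -> nat) : Prop := forall k, (phi k < phi (S k))%nat.

Lemma sincr_ge phi : sincr phi -> forall k, (k <= phi k)%nat.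
Proof. intros H k; induction k; [lia|]. specialize (H k); lia. Qed.

Lemma sincr_mono phi : sincr phi -> forall k m, (k <= m)%nat -> (phi k <= phi m)%nat.
Proof. intros H k m Hkm; induction Hkm; [lia|]. specialize (H m); lia. Qed.

Lemma sincr_comp phi psi : sincr phi -> sincr psi -> sincr (fun k => phi (psi k)).
Proof.
  intros H1 H2 k. specialize (H2 k).
  assert (H := sincr_mono phi H1 (S (psi k)) (psi (S k)) H2).
  specialize (H1 (psi k)). lia.
Qed.

Lemma cv_subseq (u : nat -> R) phi l : sincr phi -> Un_cv u l -> Un_cv (fun k => u (phi k)) l.
Proof. intros H; apply cv_sub_index; apply sincr_ge; auto. Qed.

Lemma extract_sequence (Q : nat -> nat -> Prop) :
  (forall N, exists n, (N <= n)%nat /\ Q N n) ->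
  exists psi, sincr psi /\ forall k, exists N, (k <= N)%nat /\ Q N (psi k).
Proof.
  intro H. set (sel := fun N => proj1_sig (constructive_indefinite_description _ (H N))).
  assert (Hs : forall N, (N <= sel N)%nat /\ Q N (sel N)).
  { intro N; unfold sel; destruct (constructive_indefinite_description _ (H N)); auto. }
  set (psi := fix psi k := match k with 0%nat => sel 0%nat | S k => sel (S (psi k)) end).
  assert (Hpsi : sincr psi) by (intro k; simpl; destruct (Hs (S (psi k))); lia).
  exists psi; split; auto.
  intros [|k]; simpl.
  - exists 0%nat; split; [lia|apply Hs].
  - exists (S (psi k)); split; [pose proof (sincr_ge _ Hpsi k); lia|apply Hs].
Qed.

Lemma not_cv_subseq (u : nat -> R) l : ~ Un_cv u l ->
  exists e psi, 0 < e /\ sincr psi /\ forall k, e <= Rabs (u (psi k) - l).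
Proof.
  intro Hn.
  assert (Hex : exists e, 0 < e /\
                  forall N, exists n, (N <= n)%nat /\ e <= Rabs (u n - l)).
  { apply NNPP; intro Hn2. apply Hn. intros e He. apply NNPP; intro Hn3.
    apply Hn2. exists e; split; auto. intro N. apply NNPP; intro Hn4.
    apply Hn3. exists N. intros n Hn5. unfold R_dist.
    destruct (Rlt_le_dec (Rabs (u n - l)) e); auto.
    exfalso; apply Hn4; exists n; split; auto. }
  destruct Hex as [e [He HN]].
  destruct (extract_sequence (fun _ n => e <= Rabs (u n - l)) HN) as [psi [Hpsi Hk]].
  exists e, psi; repeat split; auto. intro k. destruct (Hk k) as [_ [_ H]]; exact H.
Qed.

Lemma bolzano_weierstrass (u : nat -> R) M : (forall n, Rabs (u n) <= M) ->
  exists phi l, sincr phi /\ Un_cv (fun k => u (phi k)) l.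
Proof.
  intro HM.
  destruct (Bolzano_Weierstrass u (fun c => -M <= c <= M) (compact_P3 (-M) M)) as [l Hl].
  { intro n; specialize (HM n). pose proof (Rle_abs (u n)).
    pose proof (Rle_abs (- u n)). rewrite Rabs_Ropp in *. lra. }
  assert (Hclose : forall N, exists n, (N <= n)%nat /\ Rabs (u n - l) < / (INR N + 1)).
  { intro N. assert (Hp : 0 < / (INR N + 1))
      by (apply Rinv_0_lt_compat; pose proof (pos_INR N); lra).
    destruct (Hl (disc l (mkposreal _ Hp)) N) as [n [Hn1 Hn2]].
    - exists (mkposreal _ Hp). intros y Hy; exact Hy.
    - exists n; split; auto. }
  destruct (extract_sequence _ Hclose) as [phi [Hphi Hk]].
  exists phi, l; split; auto.
  assert (H0 : Un_cv (fun k => u (phi k) - l) 0).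
  { apply (cv0_dominated _ (fun k => / (INR k + 1)) 0); [|exact cv_inv_succ].
    intros k _. destruct (Hk k) as [N [HkN HN]].
    apply Rlt_le, Rlt_le_trans with (1 := HN).
    apply Rinv_le_contravar; [pose proof (pos_INR k); lra|].
    apply le_INR in HkN; lra. }
  pose proof (CV_plus _ _ _ _ H0 (cv_const l)) as H1. rewrite Rplus_0_l in H1.
  revert H1; apply cv_ext; intro k; ring.
Qed.

(** * Best approximation and the Riesz representation theorem *)

(** If  a <= t b  for all t in ]0,1[ with b >= 0, then  a <= 0.  This is the
    limiting step of every first-order optimality argument below. *)
Lemma nonpos_of_small_multiples a b :
  0 <= b -> (forall t, 0 < t < 1 -> a <= t * b) -> a <= 0.
Proof.
  intros Hb H. destruct (Rle_lt_dec a 0) as [|Ha]; auto.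
  destruct (Req_dec b 0) as [Hb0|Hb0].
  - specialize (H (1/2) ltac:(lra)). subst; lra.
  - set (t := Rmin (1/2) (a / (2 * b))).
    assert (Ht1 : t <= 1/2) by apply Rmin_l.
    assert (Ht2 : t <= a / (2 * b)) by apply Rmin_r.
    assert (Ht0 : 0 < t).
    { unfold t. apply Rmin_glb_lt; [lra|]. apply Rdiv_lt_0_compat; lra. }
    specialize (H t ltac:(lra)).
    assert (t * b <= a / (2 * b) * b) by (apply Rmult_le_compat_r; lra).
    replace (a / (2 * b) * b) with (a / 2) in H0 by (field; lra). lra.
Qed.

Section BestApproximation.
Context {E : IPS}.
Implicit Types x y z u v w : E.

Definition cvx_set (C : E -> Prop) : Prop := forall u v t, C u -> C v -> 0 < t < 1 ->
  C (vadd (vscal t u) (vscal (1 - t) v)).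
Definition closed_set (C : E -> Prop) : Prop :=
  forall (s : nat -> E) y, strong_cv s y -> (forall n, C (s n)) -> C y.

Lemma strong_cv_dist (s : nat -> E) y x :
  strong_cv s y -> Un_cv (fun n => norm (vsub x (s n))) (norm (vsub x y)).
Proof.
  intro Hs. apply (cv_unshift_n _ 0). intros e He.
  destruct (Hs e He) as [N HN]. exists N. intros n Hn. specialize (HN (n + 0)%nat ltac:(lia)).
  unfold R_dist in *. rewrite Rminus_0_r, Rabs_pos_eq in HN by apply norm_pos.
  pose proof (dist_triangle x (s (n + 0)%nat) y).
  pose proof (dist_triangle x y (s (n + 0)%nat)).
  rewrite (norm_sub_sym y) in H0. apply Rabs_def1; lra.
Qed.

Lemma parallelogram x u v :
  inner (vsub u v) (vsub u v) = 2 * inner (vsub x u) (vsub x u) + 2 * inner (vsub x v) (vsub x v)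
    - 4 * inner (vsub x (vadd (vscal (1/2) u) (vscal (1 - 1/2) v)))
                (vsub x (vadd (vscal (1/2) u) (vscal (1 - 1/2) v))).
Proof. inner_simpl. rewrite (inner_sym v u), (inner_sym u x), (inner_sym v x). field. Qed.

Lemma minimizing_sequence (C : E -> Prop) x0 x : C x0 ->
  exists d (us : nat -> E),
    (forall u, C u -> d <= inner (vsub x u) (vsub x u)) /\
    (forall n, C (us n) /\ inner (vsub x (us n)) (vsub x (us n)) < d + / (INR n + 1)).
Proof.
  intro H0.
  set (D := fun r => exists u, C u /\ r = - inner (vsub x u) (vsub x u)).
  assert (HDb : bound D).
  { exists 0. intros r [u [_ ->]]. pose proof (inner_pos (vsub x u)); lra. }
  destruct (completeness D HDb (ex_intro _ _ (ex_intro _ x0 (conj H0 eq_refl))))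
    as [m [Hm1 Hm2]].
  assert (Hd1 : forall u, C u -> - m <= inner (vsub x u) (vsub x u)).
  { intros u Hu. assert (D (- inner (vsub x u) (vsub x u))) by (exists u; split; auto).
    specialize (Hm1 _ H). lra. }
  assert (Hsel : forall n : nat, exists u, C u /\
                   inner (vsub x u) (vsub x u) < - m + / (INR n + 1)).
  { intro n. apply NNPP. intro Hn.
    assert (Hpos : 0 < / (INR n + 1))
      by (apply Rinv_0_lt_compat; pose proof (pos_INR n); lra).
    assert (is_upper_bound D (m - / (INR n + 1))).
    { intros r [u [Hu ->]].
      destruct (Rle_lt_dec (- inner (vsub x u) (vsub x u)) (m - / (INR n + 1))); auto.
      exfalso; apply Hn; exists u; split; auto; lra. }
    specialize (Hm2 _ H); lra. }
  exists (- m), (fun n => proj1_sig (constructive_indefinite_description _ (Hsel n))).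
  split; auto. intro n. destruct (constructive_indefinite_description _ (Hsel n)); auto.
Qed.

Lemma nearest_point (hc : complete E) (C : E -> Prop) x0 x :
  C x0 -> cvx_set C -> closed_set C ->
  exists p, C p /\ forall u, C u -> inner (vsub x p) (vsub x p) <= inner (vsub x u) (vsub x u).
Proof.
  intros H0 Hcv Hcl.
  destruct (minimizing_sequence C x0 x H0) as [d [us [Hd Hus]]].
  (* the parallelogram law makes a minimizing sequence Cauchy *)
  assert (Hcau : forall n k, inner (vsub (us n) (us k)) (vsub (us n) (us k))
                              <= 2 * / (INR n + 1) + 2 * / (INR k + 1)).
  { intros n k. rewrite (parallelogram x).
    destruct (Hus n) as [Hn1 Hn2]. destruct (Hus k) as [Hk1 Hk2].
    pose proof (Hd _ (Hcv _ _ (1/2) Hn1 Hk1 ltac:(lra))). lra. }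
  destruct (hc us) as [p Hp].
  { intros e He. destruct (inv_succ_small (e * e / 4)) as [N HN].
    { apply Rdiv_lt_0_compat; nra. }
    exists N. intros n k Hn Hk. specialize (HN n Hn) as HNn. specialize (HN k Hk) as HNk.
    pose proof (Hcau n k). unfold norm.
    rewrite <- (sqrt_square e) by lra. apply sqrt_lt_1_alt. split; [apply inner_pos|]. lra. }
  exists p; split; [apply (Hcl us); auto; intro; apply Hus|].
  intros u Hu. apply Rle_trans with d; [|auto].
  pose proof (strong_cv_dist us p x Hp) as Hdist.
  rewrite <- norm_mul_self.
  apply (lim_le_lim (fun n => norm (vsub x (us n)) * norm (vsub x (us n)))
                    (fun n => d + / (INR n + 1)) _ d 0).
  - intros n _. rewrite norm_mul_self. apply Rlt_le, Hus.
  - exact (CV_mult _ _ _ _ Hdist Hdist).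
  - pose proof (CV_plus _ _ _ _ (cv_const d) cv_inv_succ) as Hl.
    rewrite Rplus_0_r in Hl. exact Hl.
Qed.

Lemma projection (hc : complete E) (C : E -> Prop) x0 x :
  C x0 -> cvx_set C -> closed_set C ->
  exists p, C p /\ forall u, C u -> inner (vsub x p) (vsub u p) <= 0.
Proof.
  intros H0 Hcv Hcl.
  destruct (nearest_point hc C x0 x H0 Hcv Hcl) as [p [HCp Hmin]].
  exists p; split; auto. intros u Hu.
  apply (nonpos_of_small_multiples _ (/2 * inner (vsub u p) (vsub u p)));
    [pose proof (inner_pos (vsub u p)); lra|].
  intros t Ht.
  (* compare p with the point p + t (u - p) of C *)
  pose proof (Hmin _ (Hcv _ _ t Hu HCp Ht)) as Hv.
  replace (vsub x (vadd (vscal t u) (vscal (1 - t) p)))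
    with (vsub (vsub x p) (vscal t (vsub u p))) in Hv by vec_eq.
  rewrite (inner_self_sub (vsub x p)), inner_scal_l, !inner_scal_r in Hv.
  apply Rmult_le_reg_l with (2 * t); [lra|]. nra.
Qed.

Lemma orthogonal_projection (hc : complete E) (C : E -> Prop) y :
  C vzero -> closed_set C ->
  (forall u v, C u -> C v -> C (vadd u v)) -> (forall a u, C u -> C (vscal a u)) ->
  exists p, C p /\ forall k, C k -> inner (vsub y p) k = 0.
Proof.
  intros H0 Hcl Hadd Hsc.
  assert (Hcv : cvx_set C) by (intros u v t Hu Hv _; apply Hadd; apply Hsc; auto).
  destruct (projection hc C vzero y H0 Hcv Hcl) as [p [Hp HVI]].
  exists p; split; auto. intros k Hk.
  pose proof (HVI (vadd p k) (Hadd _ _ Hp Hk)) as H1.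
  pose proof (HVI (vadd p (vscal (-1) k)) (Hadd _ _ Hp (Hsc _ _ Hk))) as H2.
  replace (vsub (vadd p k) p) with k in H1 by vec_eq.
  replace (vsub (vadd p (vscal (-1) k)) p) with (vscal (-1) k) in H2 by vec_eq.
  inner_simpl_in H2. inner_simpl_in H1. inner_simpl. lra.
Qed.

Lemma bounded_kernel_closed (phi : E -> R) M :
  (forall u v, phi (vsub u v) = phi u - phi v) -> (forall u, Rabs (phi u) <= M * norm u) ->
  closed_set (fun u => phi u = 0).
Proof.
  intros Hsub Hb s y Hs HK.
  assert (Ha : Rabs (phi y) <= 0).
  { apply (lim_ge (fun n => M * norm (vsub (s n) y)) 0 _ 0).
    - intros n _. rewrite norm_sub_sym.
      replace (phi y) with (phi (vsub y (s n))) by (rewrite Hsub, HK; ring). apply Hb.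
    - rewrite <- (Rmult_0_r M). apply cv_scal. exact Hs. }
  pose proof (Rabs_pos (phi y)). pose proof (Rle_abs (phi y)).
  pose proof (Rle_abs (- phi y)). rewrite Rabs_Ropp in *. lra.
Qed.

Lemma riesz (hc : complete E) (phi : E -> R) M :
  (forall u v, phi (vadd u v) = phi u + phi v) -> (forall a u, phi (vscal a u) = a * phi u) ->
  (forall u, Rabs (phi u) <= M * norm u) ->
  exists xb, forall y, phi y = inner xb y.
Proof.
  intros Hadd Hsc Hb.
  assert (Hz : phi vzero = 0).
  { replace (@vzero E) with (vscal 0 (@vzero E)) by vec_eq. rewrite Hsc; ring. }
  assert (Hsub : forall u v, phi (vsub u v) = phi u - phi v).
  { intros u v. replace (vsub u v) with (vadd u (vscal (-1) v)) by vec_eq.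
    rewrite Hadd, Hsc; ring. }
  destruct (classic (exists y0, phi y0 <> 0)) as [[y0 Hy0]|Hn].
  2:{ exists vzero. intro y. rewrite inner_zero_l. apply NNPP; intro; apply Hn; exists y; auto. }
  (* the kernel K of phi is a closed subspace; project y0 onto it *)
  set (K := fun u => phi u = 0).
  pose proof (bounded_kernel_closed phi M Hsub Hb) as Hcl.
  destruct (orthogonal_projection hc K y0 Hz Hcl) as [p [Hp Hort]].
  { intros u v Hu Hv; unfold K in *; rewrite Hadd, Hu, Hv; ring. }
  { intros a u Hu; unfold K in *; rewrite Hsc, Hu; ring. }
  set (w := vsub y0 p).
  assert (Hw : phi w = phi y0) by (unfold w; rewrite Hsub; unfold K in Hp; rewrite Hp; ring).
  assert (Hww : inner w w <> 0).
  { intro H. apply inner_def in H. rewrite H, Hz in Hw. auto. }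
  exists (vscal (phi w / inner w w) w). intro y.
  assert (Hk : K (vsub y (vscal (phi y / phi w) w))).
  { unfold K. rewrite Hsub, Hsc. field. rewrite Hw; auto. }
  specialize (Hort _ Hk). fold w in Hort. inner_simpl_in Hort. inner_simpl.
  rewrite (inner_sym w y) in Hort.
  assert (Hwy : inner y w = phi y / phi w * inner w w) by lra.
  rewrite (inner_sym w y), Hwy. field. rewrite Hw; auto.
Qed.

End BestApproximation.

(** * Weak sequential compactness *)

(** A canonical extraction map for a real sequence: a convergent subsequence
    when the sequence is bounded (and the identity otherwise). *)
Lemma bounded_extraction_exists (v : nat -> R) : exists phi, sincr phi /\
  ((exists B, forall n, Rabs (v n) <= B) -> exists l, Un_cv (fun k => v (phi k)) l).
Proof.
  destruct (classic (exists B, forall n, Rabs (v n) <= B)) as [[B HB]|Hn].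
  - destruct (bolzano_weierstrass v B HB) as [phi [l [H1 H2]]].
    exists phi; split; auto. intros _; exists l; auto.
  - exists (fun k => k). split; [intro; lia|]. intro H; contradiction.
Qed.

Definition extraction (v : nat -> R) : nat -> nat :=
  proj1_sig (constructive_indefinite_description _ (bounded_extraction_exists v)).

Lemma extraction_spec v : sincr (extraction v) /\
  ((exists B, forall n, Rabs (v n) <= B) -> exists l, Un_cv (fun k => v (extraction v k)) l).
Proof.
  unfold extraction; destruct (constructive_indefinite_description _ (bounded_extraction_exists v)).
  auto.
Qed.

Section WeakCompactness.
Context {E : IPS} (hc : complete E) (u : nat -> E) (M : R) (HM : forall n, norm (u n) <= M).

(** [Phi j] is the j-th iterated extraction: along it, <u _, u i> converges
    for every i < j.  The diagonal [diag] works for all i at once. *)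
Fixpoint Phi (j : nat) : nat -> nat :=
  match j with
  | 0%nat => fun k => k
  | S j => fun k => Phi j (extraction (fun i => inner (u (Phi j i)) (u j)) k)
  end.

Lemma Phi_sincr j : sincr (Phi j).
Proof.
  induction j; simpl; [intro; lia|].
  apply (sincr_comp (Phi j) (extraction _)); auto. apply extraction_spec.
Qed.

Lemma Phi_tail i j k : exists t, (k <= t)%nat /\ Phi (i + j) k = Phi j t.
Proof.
  revert k; induction i; intro k; [exists k; simpl; split; auto|].
  simpl. set (v := fun i0 => inner (u (Phi (i + j) i0)) (u (i + j)%nat)).
  destruct (IHi (extraction v k)) as [t [Ht1 Ht2]].
  exists t; split; auto.
  pose proof (sincr_ge _ (proj1 (extraction_spec v)) k). lia.
Qed.

Definition diag (k : nat) : nat := Phi k k.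

Lemma diag_sincr : sincr diag.
Proof.
  intro k. unfold diag. simpl.
  set (v := fun i => inner (u (Phi k i)) (u k)).
  pose proof (sincr_ge _ (proj1 (extraction_spec v)) (S k)).
  pose proof (sincr_mono _ (Phi_sincr k) _ _ H). pose proof (Phi_sincr k k). lia.
Qed.

Lemma M_nonneg : 0 <= M.
Proof. pose proof (HM 0%nat); pose proof (norm_pos (u 0%nat)); lra. Qed.

Lemma inner_u_bound n y : Rabs (inner (u n) y) <= M * norm y.
Proof.
  eapply Rle_trans; [apply cauchy_schwarz|].
  apply Rmult_le_compat_r; [apply norm_pos|auto].
Qed.

Lemma diag_cv_term m : exists l, Un_cv (fun k => inner (u (diag k)) (u m)) l.
Proof.
  assert (Hs : forall k, exists t, (k <= t)%nat /\ diag (k + S m)%nat = Phi (S m) t).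
  { intro k. unfold diag. destruct (Phi_tail k (S m) (k + S m)) as [t [H1 H2]].
    exists t; split; [lia|auto]. }
  set (sig := fun k => proj1_sig (constructive_indefinite_description _ (Hs k))).
  assert (Hsig : forall k, (k <= sig k)%nat /\ diag (k + S m)%nat = Phi (S m) (sig k)).
  { intro k; unfold sig; destruct (constructive_indefinite_description _ (Hs k)); auto. }
  set (v := fun i => inner (u (Phi m i)) (u m)).
  destruct (proj2 (extraction_spec v)) as [l Hl].
  { exists (M * M). intro n. unfold v. eapply Rle_trans; [apply inner_u_bound|].
    apply Rmult_le_compat_l; [apply M_nonneg|auto]. }
  exists l. apply (cv_unshift_n _ (S m)).
  apply (cv_ext (fun k => v (extraction v (sig k)))).
  - intro k. destruct (Hsig k) as [_ H]. rewrite H. reflexivity.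
  - apply (cv_sub_index (fun i => v (extraction v i))); auto. intro k; apply Hsig.
Qed.

Inductive inspan : E -> Prop :=
  | inspan_0 : inspan vzero
  | inspan_cons : forall a m s, inspan s -> inspan (vadd (vscal a (u m)) s).

Lemma inspan_add s1 s2 : inspan s1 -> inspan s2 -> inspan (vadd s1 s2).
Proof.
  intros H1 H2; induction H1.
  - rewrite vadd_0_l; auto.
  - replace (vadd (vadd (vscal a (u m)) s) s2) with (vadd (vscal a (u m)) (vadd s s2))
      by vec_eq.
    constructor; auto.
Qed.

Lemma inspan_scal c s : inspan s -> inspan (vscal c s).
Proof.
  intros H; induction H.
  - replace (vscal c (@vzero E)) with (@vzero E) by vec_eq. constructor.
  - replace (vscal c (vadd (vscal a (u m)) s)) with (vadd (vscal (c * a) (u m)) (vscal c s))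
      by vec_eq.
    constructor; auto.
Qed.

Lemma inspan_cv s : inspan s -> exists l, Un_cv (fun k => inner (u (diag k)) s) l.
Proof.
  intro H; induction H.
  - exists 0. apply (cv_ext (fun _ => 0)); [intro; rewrite inner_zero_r; auto|apply cv_const].
  - destruct IHinspan as [l Hl]. destruct (diag_cv_term m) as [l' Hl'].
    exists (a * l' + l).
    apply (cv_ext (fun k => a * inner (u (diag k)) (u m) + inner (u (diag k)) s));
      [intro; inner_simpl; ring|].
    apply CV_plus; auto. apply cv_scal; auto.
Qed.

Definition closed_span (y : E) : Prop :=
  forall e, 0 < e -> exists s, inspan s /\ norm (vsub y s) < e.

Lemma closed_span_inspan s : inspan s -> closed_span s.
Proof.
  intros H e He; exists s; split; auto.
  replace (vsub s s) with (@vzero E) by vec_eq. rewrite norm_zero; auto.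
Qed.

Lemma closed_span_closed : closed_set closed_span.
Proof.
  intros s y Hs HV e He. destruct (Hs (e / 2) ltac:(lra)) as [N HN].
  specialize (HN N (le_n _)). unfold R_dist in HN.
  rewrite Rminus_0_r, Rabs_pos_eq in HN by apply norm_pos.
  destruct (HV N (e / 2) ltac:(lra)) as [t [Ht1 Ht2]]. exists t; split; auto.
  pose proof (dist_triangle y (s N) t). rewrite norm_sub_sym in HN. lra.
Qed.

Lemma closed_span_add y1 y2 : closed_span y1 -> closed_span y2 -> closed_span (vadd y1 y2).
Proof.
  intros H1 H2 e He. destruct (H1 (e/2) ltac:(lra)) as [s1 [Hs1 Hn1]].
  destruct (H2 (e/2) ltac:(lra)) as [s2 [Hs2 Hn2]].
  exists (vadd s1 s2); split; [apply inspan_add; auto|].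
  replace (vsub (vadd y1 y2) (vadd s1 s2)) with (vadd (vsub y1 s1) (vsub y2 s2)) by vec_eq.
  pose proof (norm_triangle (vsub y1 s1) (vsub y2 s2)). lra.
Qed.

Lemma closed_span_scal c y : closed_span y -> closed_span (vscal c y).
Proof.
  intros H e He.
  assert (Hc : 0 < Rabs c + 1) by (pose proof (Rabs_pos c); lra).
  destruct (H (e / (Rabs c + 1))) as [s [Hs Hn]]; [apply Rdiv_lt_0_compat; lra|].
  exists (vscal c s); split; [apply inspan_scal; auto|].
  replace (vsub (vscal c y) (vscal c s)) with (vscal c (vsub y s)) by vec_eq.
  rewrite norm_scal. pose proof (Rabs_pos c). pose proof (norm_pos (vsub y s)).
  apply Rle_lt_trans with ((Rabs c + 1) * norm (vsub y s)); [nra|].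
  replace e with ((Rabs c + 1) * (e / (Rabs c + 1))) by (field; lra).
  apply Rmult_lt_compat_l; lra.
Qed.

(** By density, convergence along the diagonal extends to the closed span
    (a Cauchy argument using the uniform bound M). *)
Lemma closed_span_cv y : closed_span y -> exists l, Un_cv (fun k => inner (u (diag k)) y) l.
Proof.
  intro HV. cut (Cauchy_crit (fun k => inner (u (diag k)) y)).
  { intro H; destruct (R_complete _ H) as [l Hl]; exists l; auto. }
  intros e He.
  assert (HM1 : 0 < 4 * (M + 1)) by (pose proof M_nonneg; lra).
  destruct (HV (e / (4 * (M + 1)))) as [s [Hs Hn]]; [apply Rdiv_lt_0_compat; lra|].
  destruct (inspan_cv s Hs) as [l Hl]. destruct (Hl (e / 4) ltac:(lra)) as [N HN].
  exists N. intros n m Hn' Hm'. unfold R_dist in *.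
  specialize (HN n Hn') as HNn. specialize (HN m Hm') as HNm.
  assert (Hb : forall k, Rabs (inner (u k) (vsub y s)) <= e / 4).
  { intro k. eapply Rle_trans; [apply inner_u_bound|].
    apply Rle_trans with (M * (e / (4 * (M + 1)))); [apply Rmult_le_compat_l; [apply M_nonneg|lra]|].
    apply Rmult_le_reg_r with (4 * (M + 1)); [lra|].
    replace (M * (e / (4 * (M + 1))) * (4 * (M + 1))) with (M * e) by (field; lra).
    pose proof M_nonneg. nra. }
  pose proof (Hb (diag n)) as Hbn. pose proof (Hb (diag m)) as Hbm.
  inner_simpl_in Hbn. inner_simpl_in Hbm.
  revert HNn HNm Hbn Hbm. unfold Rabs; repeat destruct Rcase_abs; intros; lra.
Qed.

(** Projecting y onto the closed span reduces convergence for arbitrary y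
    to the previous lemma. *)
Lemma diag_cv y : exists l, Un_cv (fun k => inner (u (diag k)) y) l.
Proof.
  destruct (orthogonal_projection hc closed_span y) as [p [Hp Hort]].
  - apply closed_span_inspan; constructor.
  - apply closed_span_closed.
  - apply closed_span_add.
  - apply closed_span_scal.
  - destruct (closed_span_cv p Hp) as [l Hl]. exists l.
    apply (cv_ext (fun k => inner (u (diag k)) p)); auto.
    intro k. assert (Hk : closed_span (u (diag k))).
    { apply closed_span_inspan.
      replace (u (diag k)) with (vadd (vscal 1 (u (diag k))) vzero) by vec_eq.
      repeat constructor. }
    specialize (Hort _ Hk). inner_simpl_in Hort.
    rewrite (inner_sym y), (inner_sym p) in Hort. lra.
Qed.

Definition diag_limit (y : E) : R :=
  proj1_sig (constructive_indefinite_description _ (diag_cv y)).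

Lemma diag_limit_spec y : Un_cv (fun k => inner (u (diag k)) y) (diag_limit y).
Proof. unfold diag_limit; destruct (constructive_indefinite_description _ (diag_cv y)); auto. Qed.

(** Every bounded sequence in a Hilbert space has a weakly convergent
    subsequence: the limit functional is bounded linear, hence Riesz. *)
Lemma weak_compact : exists phi xb, sincr phi /\ weak_cv (fun k => u (phi k)) xb.
Proof.
  destruct (riesz hc diag_limit M) as [xb Hxb].
  - intros y1 y2. apply (UL_sequence (fun k => inner (u (diag k)) (vadd y1 y2)));
      [apply diag_limit_spec|].
    apply (cv_ext (fun k => inner (u (diag k)) y1 + inner (u (diag k)) y2));
      [intro; inner_simpl; ring|].
    apply CV_plus; apply diag_limit_spec.
  - intros a y. apply (UL_sequence (fun k => inner (u (diag k)) (vscal a y)));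
      [apply diag_limit_spec|].
    apply (cv_ext (fun k => a * inner (u (diag k)) y)); [intro; inner_simpl; ring|].
    apply cv_scal; apply diag_limit_spec.
  - intro y. pose proof (fun n => inner_u_bound (diag n) y) as Hb.
    apply Rabs_le. split.
    + apply (lim_ge (fun k => inner (u (diag k)) y) (diag_limit y) _ 0);
        [|apply diag_limit_spec].
      intros n _. specialize (Hb n). pose proof (Rle_abs (- inner (u (diag n)) y)).
      rewrite Rabs_Ropp in *. lra.
    + apply (lim_le (fun k => inner (u (diag k)) y) (diag_limit y) _ 0);
        [|apply diag_limit_spec].
      intros n _. specialize (Hb n). pose proof (Rle_abs (inner (u (diag n)) y)). lra.
  - exists diag, xb. split; [apply diag_sincr|]. intro y. rewrite <- Hxb. apply diag_limit_spec.
Qed.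

End WeakCompactness.

Lemma weak_cv_of_cluster_points {E : IPS} (hc : complete E) (u : nat -> E) M xb :
  (forall n, norm (u n) <= M) ->
  (forall phi x, sincr phi -> weak_cv (fun k => u (phi k)) x -> x = xb) ->
  weak_cv u xb.
Proof.
  intros HM Hcl y. apply NNPP. intro Hn.
  destruct (not_cv_subseq _ _ Hn) as [e [psi [He [Hpsi Hfar]]]].
  destruct (weak_compact hc (fun k => u (psi k)) M (fun k => HM (psi k)))
    as [th [x2 [Hth Hw2]]].
  assert (Hx2 : x2 = xb) by (apply (Hcl (fun k => psi (th k))); auto; apply sincr_comp; auto).
  subst x2. destruct (Hw2 y e He) as [N HN2].
  specialize (HN2 N (le_n _)). specialize (Hfar (th N)). unfold R_dist in HN2. lra.
Qed.

Lemma weak_cv_close {E : IPS} (s t : nat -> E) xb :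
  weak_cv s xb -> Un_cv (fun n => norm (vsub (t n) (s n))) 0 -> weak_cv t xb.
Proof.
  intros Hw Hn y.
  apply (cv_ext (fun n => inner (s n) y + inner (vsub (t n) (s n)) y)); [intro; inner_simpl; ring|].
  rewrite <- (Rplus_0_r (inner xb y)). apply CV_plus; [apply Hw|].
  apply (cv0_dominated _ (fun n => norm (vsub (t n) (s n)) * norm y) 0);
    [intros; apply cauchy_schwarz|].
  rewrite <- (Rmult_0_l (norm y)). apply CV_mult; [auto|apply cv_const].
Qed.

(** * Convex analysis *)

Definition frechet_at {E : IPS} (h : E -> R) (x g0 : E) : Prop :=
  forall e, 0 < e -> exists dl, 0 < dl /\
    forall d, norm d < dl -> Rabs (h (vadd x d) - h x - inner g0 d) <= e * norm d.

Section ConvexAnalysis.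
Context {E : IPS}.
Implicit Types x y z u v w : E.

Lemma subdiff_mono (f : E -> ereal) x y u v : subdiff f x u -> subdiff f y v ->
  0 <= inner (vsub u v) (vsub x y).
Proof.
  intros [Hx1 Hx2] [Hy1 Hy2]. specialize (Hx2 y). specialize (Hy2 x).
  destruct (f x) as [fx|]; [|congruence]. destruct (f y) as [fy|]; [|congruence].
  simpl in *. inner_simpl_in Hx2. inner_simpl_in Hy2. inner_simpl.
  rewrite (inner_sym x u), (inner_sym y u), (inner_sym x v), (inner_sym y v) in *. lra.
Qed.

Lemma prox_subdiff (f : E -> ereal) g y p : 0 < g -> proper f -> convex_fun f ->
  is_prox g f y p -> subdiff f p (vscal (/ g) (vsub y p)).
Proof.
  intros Hg [x0 Hx0] Hcv Hp.
  assert (Hfp : f p <> PInf).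
  { intro H. specialize (Hp x0). rewrite H in Hp.
    destruct (f x0); simpl in Hp; [contradiction|congruence]. }
  split; auto. intro w.
  destruct (f p) as [fp|] eqn:Efp; [|congruence].
  destruct (f w) as [fw|] eqn:Efw; [|simpl; auto].
  simpl.
  set (I := inner (vsub y p) (vsub w p)). set (B := inner (vsub w p) (vsub w p)).
  assert (HB : 0 <= B) by apply inner_pos.
  (* compare p with the convex combination p + t (w - p) *)
  assert (Key : forall t, 0 < t < 1 -> g * fp + I <= g * fw + t * B / 2).
  { intros t Ht. specialize (Hcv w p t Ht). rewrite Efw, Efp in Hcv. simpl in Hcv.
    specialize (Hp (vadd (vscal t w) (vscal (1 - t) p))).
    destruct (f (vadd (vscal t w) (vscal (1 - t) p))) as [fq|]; [|contradiction].
    rewrite Efp in Hp. simpl in Hp, Hcv.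
    rewrite !Rmult_1_r, !norm_mul_self in Hp.
    replace (vsub y (vadd (vscal t w) (vscal (1 - t) p)))
      with (vsub (vsub y p) (vscal t (vsub w p))) in Hp by vec_eq.
    rewrite (inner_self_sub (vsub y p)), inner_scal_l, !inner_scal_r in Hp. fold I B in Hp.
    assert (H1 : g * t * fp + t * I <= g * t * fw + t * t * B / 2) by nra.
    apply Rmult_le_reg_l with t; [lra|]. nra. }
  assert (Hmain : g * fp + I <= g * fw).
  { assert (g * fp + I - g * fw <= 0); [|lra].
    apply (nonpos_of_small_multiples _ (B / 2)); [lra|].
    intros t Ht; specialize (Key t Ht); lra. }
  rewrite inner_scal_r, inner_sym. fold I.
  apply Rmult_le_reg_l with g; [lra|].
  replace (g * (fp + / g * I)) with (g * fp + I) by (field; lra). lra.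
Qed.

(** A proper lsc convex function is weakly lower semicontinuous: if
    f (s k) <= c + d k with d k -> 0 and s k weakly converging to xb, then
    f xb <= c.  (Sublevel sets are closed and convex; project xb onto them.) *)
Lemma weak_lsc (hc : complete E) (f : E -> ereal) (s : nat -> E) xb c (d : nat -> R) :
  convex_fun f -> lsc f -> weak_cv s xb -> Un_cv d 0 ->
  (forall k, ele (f (s k)) (Fin (c + d k))) -> ele (f xb) (Fin c).
Proof.
  intros Hcv Hlsc Hw Hd Hs.
  assert (Hrho : forall rho, c < rho -> ele (f xb) (Fin rho)).
  { intros rho Hr. set (C := fun v => ele (f v) (Fin rho)).
    destruct (Hd (rho - c) ltac:(lra)) as [N HN].
    assert (HC : forall k, (N <= k)%nat -> C (s k)).
    { intros k Hk. specialize (HN k Hk). unfold R_dist in HN. rewrite Rminus_0_r in HN.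
      pose proof (Rle_abs (d k)). specialize (Hs k). unfold C.
      destruct (f (s k)); simpl in *; [lra|auto]. }
    assert (Hcvx : cvx_set C).
    { intros a b t Ha Hb Ht. unfold C in *. specialize (Hcv a b t Ht).
      destruct (f a) as [fa|]; [|contradiction]. destruct (f b) as [fb|]; [|contradiction].
      destruct (f (vadd (vscal t a) (vscal (1 - t) b))); simpl in *; [nra|auto]. }
    destruct (projection hc C (s N) xb (HC N (le_n _)) Hcvx (Hlsc rho)) as [p [Hp HVI]].
    assert (Hle : inner (vsub xb p) (vsub xb p) <= 0).
    { apply (lim_le (fun k => inner (vsub (s k) p) (vsub xb p)) _ _ N).
      - intros k Hk. rewrite inner_sym. apply HVI, HC; auto.
      - apply (cv_ext (fun k => inner (s k) (vsub xb p) - inner p (vsub xb p)));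
          [intro; rewrite inner_sub_l; auto|].
        rewrite inner_sub_l. apply CV_minus; [apply Hw|apply cv_const]. }
    pose proof (inner_pos (vsub xb p)).
    assert (Hx : xb = p) by (apply vsub_eq0, inner_def; lra). subst; auto. }
  destruct (f xb) as [fx|] eqn:Ef.
  - simpl. destruct (Rle_lt_dec fx c); auto.
    specialize (Hrho ((fx + c) / 2) ltac:(lra)). simpl in Hrho. lra.
  - specialize (Hrho (c + 1) ltac:(lra)). simpl in Hrho. auto.
Qed.

Lemma grad_ineq (h : E -> R) (g0 x : E) : convex_real h -> frechet_at h x g0 ->
  forall y, h x + inner g0 (vsub y x) <= h y.
Proof.
  intros Hc Hd y. set (d := vsub y x).
  assert (inner g0 d - (h y - h x) <= 0); [|lra].
  apply (nonpos_of_small_multiples _ (norm d)); [apply norm_pos|]. intros e [He _].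
  destruct (Hd e He) as [dl [Hdl Hdd]].
  set (t := Rmin (1/2) (dl / (2 * (norm d + 1)))).
  assert (Hnd : 0 <= norm d) by apply norm_pos.
  assert (Ht0 : 0 < t) by (unfold t; apply Rmin_glb_lt; [lra|apply Rdiv_lt_0_compat; lra]).
  assert (Ht1 : t <= 1/2) by apply Rmin_l.
  assert (Ht2 : t <= dl / (2 * (norm d + 1))) by apply Rmin_r.
  assert (Hn : norm (vscal t d) < dl).
  { rewrite norm_scal, Rabs_pos_eq by lra.
    apply Rle_lt_trans with (dl / (2 * (norm d + 1)) * norm d); [apply Rmult_le_compat_r; lra|].
    apply Rmult_lt_reg_r with (2 * (norm d + 1)); [lra|].
    replace (dl / (2 * (norm d + 1)) * norm d * (2 * (norm d + 1))) with (dl * norm d)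
      by (field; lra).
    nra. }
  specialize (Hdd _ Hn). rewrite norm_scal, (Rabs_pos_eq t) in Hdd by lra.
  specialize (Hc y x t ltac:(lra)).
  replace (vadd (vscal t y) (vscal (1 - t) x)) with (vadd x (vscal t d)) in Hc
    by (unfold d; vec_eq).
  rewrite inner_scal_r in Hdd.
  assert (Hr := Rle_abs (- (h (vadd x (vscal t d)) - h x - t * inner g0 d))).
  rewrite Rabs_Ropp in Hr.
  assert (t * inner g0 d <= t * (h y - h x + e * norm d)) by nra.
  apply Rmult_le_reg_l with t; lra.
Qed.

End ConvexAnalysis.

(** * Tseng's forward-backward-forward scheme with errors *)

(** The basic identity behind Tseng's Fejer estimate. *)
Lemma tseng_identity {E : IPS} (x r x2 z : E) :
  inner (vsub x2 z) (vsub x2 z) = inner (vsub x z) (vsub x z) - inner (vsub x r) (vsub x r)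
   + inner (vsub x2 r) (vsub x2 r) - 2 * inner (vsub x x2) (vsub r z).
Proof.
  inner_simpl.
  rewrite ?(inner_sym z x2), ?(inner_sym z x), ?(inner_sym r x), ?(inner_sym r x2),
    ?(inner_sym z r), ?(inner_sym x2 x).
  ring.
Qed.

Lemma absorb_error al e rho d g K0 : 0 <= al -> 0 <= e -> 0 <= rho -> 0 < d <= 1 -> 0 < g ->
  2 * g / d <= K0 ->
  al * al - d * rho * rho + 2 * g * e * (al + rho)
    <= (al + K0 * e) * (al + K0 * e) - d / 2 * rho * rho.
Proof.
  intros Ha He Hr Hd Hg HK.
  set (K := 2 * g / d).
  assert (HK1 : g <= K).
  { unfold K. apply Rmult_le_reg_r with d; [lra|].
    replace (2 * g / d * d) with (2 * g) by (field; lra). nra. }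
  (* Young's inequality:  2 g e rho <= d/2 rho^2 + 2 g^2 e^2 / d *)
  assert (Hyoung : 2 * g * e * rho <= d / 2 * rho * rho + 2 * g * g * e * e / d).
  { assert (0 <= d / 2 * ((rho - 2 * g * e / d) * (rho - 2 * g * e / d))).
    { apply Rmult_le_pos; [lra|]. apply Rle_0_sqr. }
    replace (d / 2 * ((rho - 2 * g * e / d) * (rho - 2 * g * e / d))) with
      (d / 2 * rho * rho - 2 * g * e * rho + 2 * g * g * e * e / d) in H by (field; lra).
    lra. }
  assert (Hq : 2 * g * g * e * e / d <= K * K * e * e).
  { apply Rmult_le_reg_r with d; [lra|].
    replace (2 * g * g * e * e / d * d) with (2 * g * g * e * e) by (field; lra).
    unfold K. replace (2 * g / d * (2 * g / d) * e * e * d) with (4 * g * g * e * e / d)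
      by (field; lra).
    apply Rmult_le_reg_r with d; [lra|].
    replace (4 * g * g * e * e / d * d) with (4 * g * g * e * e) by (field; lra). nra. }
  assert (HKK : K <= K0) by exact HK. assert (0 <= K) by lra. clearbody K.
  assert (H1 : 0 <= (K0 - g) * (al * e)) by (apply Rmult_le_pos; [lra|apply Rmult_le_pos; lra]).
  assert (H2 : 0 <= (K0 * K0 - K * K) * (e * e)) by (apply Rmult_le_pos; [nra|apply Rle_0_sqr]).
  nra.
Qed.

Definition monotone_op {E : IPS} (B : E -> E) : Prop :=
  forall x y, 0 <= inner (vsub (B x) (B y)) (vsub x y).

Section Tseng.
Context {E : IPS} (hc : complete E) (f : E -> ereal)
  (hfp : proper f) (hfc : convex_fun f) (hfl : lsc f)
  (B : E -> E) (chi : R) (hchi : 0 < chi)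
  (HBl : lipschitz chi B) (HBm : monotone_op B)
  (eps : R) (heps : 0 < eps < 1 / (chi + 1))
  (gamma : nat -> R) (hgamma : forall n, eps <= gamma n <= (1 - eps) / chi)
  (a b c : nat -> E)
  (ha : abs_summable a) (hb : abs_summable b) (hc' : abs_summable c)
  (X P : nat -> E).

Definition Zer (z : E) : Prop := subdiff f z (vopp (B z)).

Definition Y n := vsub (X n) (vscal (gamma n) (vadd (B (X n)) (a n))).
Definition Q n := vsub (P n) (vscal (gamma n) (vadd (B (P n)) (c n))).
(** the exact proximal point *)
Definition Pr n := vsub (P n) (b n).
(** a subgradient of f at [Pr n] *)
Definition U n := vscal (/ gamma n) (vsub (Y n) (Pr n)).
(** the error-free Tseng update *)
Definition Xe n := vadd (Pr n) (vscal (gamma n) (vsub (B (X n)) (B (Pr n)))).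
(** an element of  (df + B) (Pr n) *)
Definition W n := vadd (U n) (B (Pr n)).
Definition K0 := 2 / (chi * eps).
Definition K1 := / chi + 2.
Definition er n := norm (a n) + norm (b n) + norm (c n).

Context (hz : exists z, Zer z)
  (hp : forall n, is_prox (gamma n) f (Y n) (Pr n))
  (hx : forall n, X (S n) = vadd (vsub (X n) (Y n)) (Q n)).

Lemma gamma_pos n : 0 < gamma n.
Proof. pose proof (hgamma n); lra. Qed.

Lemma gamma_chi n : gamma n * chi <= 1 - eps.
Proof.
  destruct (hgamma n) as [_ H]. apply Rmult_le_compat_r with (r := chi) in H; [|lra].
  replace ((1 - eps) / chi * chi) with (1 - eps) in H by (field; lra). lra.
Qed.

Lemma gamma_le n : gamma n <= / chi.
Proof.
  pose proof (gamma_chi n). pose proof heps. apply Rmult_le_reg_r with chi; [lra|].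
  rewrite Rinv_l by lra. lra.
Qed.

Lemma U_subdiff n : subdiff f (Pr n) (U n).
Proof. apply prox_subdiff; auto. apply gamma_pos. Qed.

Lemma er_nonneg n : 0 <= er n.
Proof.
  unfold er; pose proof (norm_pos (a n)); pose proof (norm_pos (b n));
    pose proof (norm_pos (c n)); lra.
Qed.

Lemma norm_a_le_er n : norm (a n) <= er n.
Proof. unfold er; pose proof (norm_pos (b n)); pose proof (norm_pos (c n)); lra. Qed.

Lemma er_summable : summable er.
Proof. unfold er. apply summable_plus; [apply summable_plus|]; auto. Qed.

Lemma K0_pos : 0 < K0.
Proof. unfold K0. pose proof heps. apply Rdiv_lt_0_compat; [lra|]. nra. Qed.

Lemma fbf_descent z n : Zer z ->
  inner (vsub (Xe n) z) (vsub (Xe n) z) <= inner (vsub (X n) z) (vsub (X n) z)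
    - (1 - gamma n * gamma n * chi * chi) * inner (vsub (X n) (Pr n)) (vsub (X n) (Pr n))
    + 2 * gamma n * norm (a n) * norm (vsub (Pr n) z).
Proof.
  intro Hz. pose proof (gamma_pos n) as Hg.
  (* monotonicity of df + B between Pr n and z *)
  assert (Hmono : 0 <= inner (vsub (vsub (X n) (Xe n)) (vscal (gamma n) (a n))) (vsub (Pr n) z)).
  { pose proof (subdiff_mono f _ _ _ _ (U_subdiff n) Hz) as H1.
    pose proof (HBm (Pr n) z) as H2.
    replace (vsub (vsub (X n) (Xe n)) (vscal (gamma n) (a n)))
      with (vscal (gamma n) (vadd (vsub (U n) (vopp (B z))) (vsub (B (Pr n)) (B z)))).
    - rewrite inner_scal_l, inner_add_l. apply Rmult_le_pos; lra.
    - unfold U, Xe, Y. apply vec_ext; intro w; inner_simpl. field. lra. }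
  (* the Lipschitz property controls  Xe n - Pr n *)
  assert (Hlip : inner (vsub (Xe n) (Pr n)) (vsub (Xe n) (Pr n)) <=
     gamma n * gamma n * chi * chi * inner (vsub (X n) (Pr n)) (vsub (X n) (Pr n))).
  { replace (vsub (Xe n) (Pr n)) with (vscal (gamma n) (vsub (B (X n)) (B (Pr n))))
      by (unfold Xe; vec_eq).
    rewrite <- !norm_mul_self, norm_scal, Rabs_pos_eq by lra.
    pose proof (HBl (X n) (Pr n)). pose proof (norm_pos (vsub (B (X n)) (B (Pr n)))).
    pose proof (norm_pos (vsub (X n) (Pr n))).
    assert (norm (vsub (B (X n)) (B (Pr n))) * norm (vsub (B (X n)) (B (Pr n))) <=
      chi * norm (vsub (X n) (Pr n)) * (chi * norm (vsub (X n) (Pr n))))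
      by (apply Rmult_le_compat; auto).
    nra. }
  assert (Herr : - inner (vscal (gamma n) (a n)) (vsub (Pr n) z)
                   <= gamma n * norm (a n) * norm (vsub (Pr n) z)).
  { rewrite inner_scal_l. pose proof (cauchy_schwarz (a n) (vsub (Pr n) z)).
    pose proof (Rle_abs (- inner (a n) (vsub (Pr n) z))). rewrite Rabs_Ropp in *. nra. }
  rewrite (tseng_identity (X n) (Pr n) (Xe n) z).
  rewrite inner_sub_l in Hmono. lra.
Qed.

Lemma fbf_descent_sq z n : Zer z ->
  inner (vsub (Xe n) z) (vsub (Xe n) z)
    <= (norm (vsub (X n) z) + K0 * norm (a n)) * (norm (vsub (X n) z) + K0 * norm (a n))
       - eps / 2 * (norm (vsub (X n) (Pr n)) * norm (vsub (X n) (Pr n))).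
Proof.
  intro Hz. pose proof (fbf_descent z n Hz) as H1.
  pose proof (gamma_pos n) as Hg. pose proof (gamma_chi n) as Hgc.
  pose proof heps as He.
  set (d := 1 - gamma n * gamma n * chi * chi).
  assert (Hd1 : eps <= d) by (unfold d; assert (0 <= gamma n * chi) by nra; nra).
  assert (Hd2 : d <= 1) by (unfold d; nra).
  assert (HK : 2 * gamma n / d <= K0).
  { unfold K0. apply Rmult_le_reg_r with (d * chi * eps); [apply Rmult_lt_0_compat; nra|].
    replace (2 * gamma n / d * (d * chi * eps)) with (2 * (gamma n * chi) * eps) by (field; lra).
    replace (2 / (chi * eps) * (d * chi * eps)) with (2 * d) by (field; lra).
    assert (gamma n * chi <= 1) by lra. nra. }
  pose proof (absorb_error (norm (vsub (X n) z)) (norm (a n)) (norm (vsub (X n) (Pr n))) d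
    (gamma n) K0 (norm_pos _) (norm_pos _) (norm_pos _) ltac:(lra) Hg HK) as H2.
  rewrite <- !norm_mul_self in H1. fold d in H1.
  pose proof (dist_triangle (Pr n) (X n) z) as Htri. rewrite (norm_sub_sym (Pr n) (X n)) in Htri.
  pose proof (norm_pos (a n)). pose proof (norm_pos (vsub (X n) (Pr n))).
  assert (2 * gamma n * norm (a n) * norm (vsub (Pr n) z) <=
          2 * gamma n * norm (a n) * (norm (vsub (X n) z) + norm (vsub (X n) (Pr n)))).
  { apply Rmult_le_compat_l; [nra|lra]. }
  assert (eps / 2 * (norm (vsub (X n) (Pr n)) * norm (vsub (X n) (Pr n))) <=
    d / 2 * norm (vsub (X n) (Pr n)) * norm (vsub (X n) (Pr n))) by nra.
  rewrite <- norm_mul_self. lra.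
Qed.

Lemma Xe_dist z n : Zer z -> norm (vsub (Xe n) z) <= norm (vsub (X n) z) + K0 * er n.
Proof.
  intro Hz. pose proof (fbf_descent_sq z n Hz) as H. pose proof K0_pos.
  pose proof (norm_pos (vsub (X n) z)). pose proof (norm_pos (a n)).
  pose proof (norm_pos (vsub (X n) (Pr n))).
  assert (Hd : norm (vsub (Xe n) z) <= norm (vsub (X n) z) + K0 * norm (a n))
    by (apply norm_le_sq; nra).
  pose proof (Rmult_le_compat_l K0 _ _ (Rlt_le _ _ K0_pos) (norm_a_le_er n)). lra.
Qed.

Lemma X_Xe_dist n : norm (vsub (X (S n)) (Xe n)) <= K1 * er n.
Proof.
  pose proof (gamma_pos n) as Hg. pose proof (gamma_chi n) as Hgc. pose proof (gamma_le n) as Hgl.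
  rewrite hx.
  replace (vsub (vadd (vsub (X n) (Y n)) (Q n)) (Xe n)) with
    (vadd (vadd (vscal (gamma n) (a n)) (b n))
      (vopp (vadd (vscal (gamma n) (vsub (B (P n)) (B (Pr n)))) (vscal (gamma n) (c n)))))
    by (unfold Y, Q, Xe, Pr; vec_eq).
  eapply Rle_trans; [apply norm_triangle|]. rewrite norm_opp.
  eapply Rle_trans; [apply Rplus_le_compat; apply norm_triangle|].
  rewrite !norm_scal, !Rabs_pos_eq by lra.
  pose proof (HBl (P n) (Pr n)) as HL.
  replace (vsub (P n) (Pr n)) with (b n) in HL by (unfold Pr; vec_eq).
  pose proof (norm_pos (a n)). pose proof (norm_pos (b n)). pose proof (norm_pos (c n)).
  pose proof (norm_pos (vsub (B (P n)) (B (Pr n)))).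
  assert (gamma n * norm (vsub (B (P n)) (B (Pr n))) <= norm (b n)).
  { apply Rle_trans with (gamma n * (chi * norm (b n))); [apply Rmult_le_compat_l; lra|]. nra. }
  unfold K1, er.
  assert (0 < / chi) by (apply Rinv_0_lt_compat; lra).
  assert (gamma n * norm (a n) <= / chi * norm (a n)) by (apply Rmult_le_compat_r; lra).
  assert (gamma n * norm (c n) <= / chi * norm (c n)) by (apply Rmult_le_compat_r; lra).
  nra.
Qed.

Lemma quasi_fejer_step z n : Zer z ->
  norm (vsub (X (S n)) z) <= norm (vsub (X n) z) + (K0 + K1) * er n.
Proof.
  intro Hz. pose proof (Xe_dist z n Hz). pose proof (X_Xe_dist n).
  pose proof (dist_triangle (X (S n)) (Xe n) z). lra.
Qed.

Lemma dist_cv z : Zer z -> exists l, Un_cv (fun n => norm (vsub (X n) z)) l.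
Proof.
  intro Hz. apply (quasi_fejer_cv _ (fun n => (K0 + K1) * er n)).
  - intro; apply norm_pos.
  - intro n. apply Rmult_le_pos; [|apply er_nonneg]. pose proof K0_pos. unfold K1.
    assert (0 < / chi) by (apply Rinv_0_lt_compat; lra). lra.
  - apply summable_scal, er_summable.
  - intro n; apply quasi_fejer_step; auto.
Qed.

Lemma er_cv0 : Un_cv er 0.
Proof. apply summable_terms, er_summable. Qed.

Lemma Xe_dist_cv z l : Zer z -> Un_cv (fun n => norm (vsub (X n) z)) l ->
  Un_cv (fun n => norm (vsub (Xe n) z)) l.
Proof.
  intros Hz Hl. pose proof er_cv0 as Her.
  apply (squeeze (fun n => norm (vsub (X (S n)) z) - K1 * er n) _
                 (fun n => norm (vsub (X n) z) + K0 * er n) l 0).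
  - intros n _. split; [|apply Xe_dist; auto].
    pose proof (dist_triangle (X (S n)) (Xe n) z). pose proof (X_Xe_dist n). lra.
  - pose proof (CV_minus _ _ _ _ (cv_shift _ _ Hl) (cv_scal _ _ K1 Her)) as H1.
    replace (l - K1 * 0) with l in H1 by ring. exact H1.
  - pose proof (CV_plus _ _ _ _ Hl (cv_scal _ _ K0 Her)) as H1.
    replace (l + K0 * 0) with l in H1 by ring. exact H1.
Qed.

(** The residual  X n - Pr n  vanishes: by the descent inequality it is
    bounded by the difference of two sequences with the same limit. *)
Lemma residual_cv0 : Un_cv (fun n => norm (vsub (X n) (Pr n))) 0.
Proof.
  destruct hz as [z Hz]. destruct (dist_cv z Hz) as [l Hl].
  set (al := fun n => norm (vsub (X n) z)). set (D := fun n => norm (vsub (Xe n) z)).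
  pose proof K0_pos. pose proof er_cv0 as Her. pose proof (Xe_dist_cv z l Hz Hl) as HD.
  apply cv0_sqrt; [intro; apply norm_pos|].
  apply (squeeze (fun _ => 0) _
    (fun n => 2 / eps * ((al n + K0 * er n) * (al n + K0 * er n) - D n * D n)) 0 0).
  - intros n _. pose proof (fbf_descent_sq z n Hz) as H1. fold (al n) in H1.
    rewrite <- norm_mul_self in H1. fold (D n) in H1. pose proof heps.
    assert (Hae : 0 <= al n + K0 * norm (a n) <= al n + K0 * er n).
    { pose proof (norm_pos (vsub (X n) z)). pose proof (norm_pos (a n)).
      pose proof (Rmult_le_compat_l K0 _ _ (Rlt_le _ _ K0_pos) (norm_a_le_er n)).
      unfold al. split; nra. }
    assert ((al n + K0 * norm (a n)) * (al n + K0 * norm (a n))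
              <= (al n + K0 * er n) * (al n + K0 * er n)) by (apply Rmult_le_compat; lra).
    pose proof (norm_pos (vsub (X n) (Pr n))).
    split; [nra|].
    apply Rmult_le_reg_l with (eps / 2); [lra|].
    replace (eps / 2 * (2 / eps * ((al n + K0 * er n) * (al n + K0 * er n) - D n * D n)))
      with ((al n + K0 * er n) * (al n + K0 * er n) - D n * D n) by (field; lra).
    lra.
  - apply cv_const.
  - assert (Hs : Un_cv (fun n => al n + K0 * er n) (l + K0 * 0))
      by exact (CV_plus _ _ _ _ Hl (cv_scal _ _ K0 Her)).
    pose proof (cv_scal _ _ (2 / eps)
      (CV_minus _ _ _ _ (CV_mult _ _ _ _ Hs Hs) (CV_mult _ _ _ _ HD HD))) as H1.
    replace (2 / eps * ((l + K0 * 0) * (l + K0 * 0) - l * l)) with 0 in H1 by ring. exact H1.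
Qed.

(** W n = (X n - Pr n)/gamma n - (B (X n) - B (Pr n)) - a n. *)
Lemma W_bound n : norm (W n) <= (/ eps + chi) * norm (vsub (X n) (Pr n)) + norm (a n).
Proof.
  pose proof (gamma_pos n) as Hg. pose proof (hgamma n) as Hge.
  replace (W n) with
    (vsub (vsub (vscal (/ gamma n) (vsub (X n) (Pr n))) (vsub (B (X n)) (B (Pr n)))) (a n)).
  2:{ unfold W, U, Y. apply vec_ext; intro w; inner_simpl. field. lra. }
  eapply Rle_trans; [apply norm_sub_triangle|].
  eapply Rle_trans; [apply Rplus_le_compat_r, norm_sub_triangle|].
  rewrite norm_scal, Rabs_pos_eq by (left; apply Rinv_0_lt_compat; lra).
  pose proof (HBl (X n) (Pr n)). pose proof (norm_pos (vsub (X n) (Pr n))).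
  assert (/ gamma n <= / eps) by (apply Rinv_le_contravar; lra).
  assert (/ gamma n * norm (vsub (X n) (Pr n)) <= / eps * norm (vsub (X n) (Pr n)))
    by (apply Rmult_le_compat_r; lra).
  lra.
Qed.

Lemma W_cv0 : Un_cv (fun n => norm (W n)) 0.
Proof.
  apply (cv0_dominated _ (fun n => (/ eps + chi) * norm (vsub (X n) (Pr n)) + norm (a n)) 0).
  - intros n _. rewrite Rabs_pos_eq by apply norm_pos. apply W_bound.
  - replace 0 with ((/ eps + chi) * 0 + 0) by ring.
    apply CV_plus; [apply cv_scal, residual_cv0|]. apply summable_terms; auto.
Qed.

(** Quasi-Fejer sequences are bounded. *)
Lemma X_bounded : exists M, forall n, norm (X n) <= M.
Proof.
  destruct hz as [z Hz]. destruct (dist_cv z Hz) as [l Hl]. destruct (cv_bounded _ _ Hl) as [M HM].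
  exists (M + norm z). intro n. specialize (HM n). rewrite Rabs_pos_eq in HM by apply norm_pos.
  replace (X n) with (vadd (vsub (X n) z) z) by vec_eq.
  pose proof (norm_triangle (vsub (X n) z) z). lra.
Qed.

Lemma Pr_bounded : exists M, forall n, norm (Pr n) <= M.
Proof.
  destruct X_bounded as [M HM]. destruct (cv_bounded _ _ residual_cv0) as [M' HM'].
  exists (M + M'). intro n. specialize (HM n). specialize (HM' n).
  rewrite Rabs_pos_eq in HM' by apply norm_pos.
  replace (Pr n) with (vsub (X n) (vsub (X n) (Pr n))) by vec_eq.
  pose proof (norm_sub_triangle (X n) (vsub (X n) (Pr n))). lra.
Qed.

(** Minty's trick: a weak cluster point xb of X satisfies
    f xb <= f y + <y - xb, B y>  for every y in dom f.  Indeed W n lies in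
    (df + B)(Pr n), W n -> 0 strongly, Pr n - X n -> 0, and B is monotone;
    conclude by weak lower semicontinuity of f. *)
Lemma minty_limit phi xb : sincr phi -> weak_cv (fun k => X (phi k)) xb ->
  forall y fy, f y = Fin fy -> ele (f xb) (Fin (fy + inner (vsub y xb) (B y))).
Proof.
  intros Hphi Hw y fy Hfy.
  assert (HwPr : weak_cv (fun k => Pr (phi k)) xb).
  { apply (weak_cv_close (fun k => X (phi k))); auto.
    apply (cv_ext (fun k => norm (vsub (X (phi k)) (Pr (phi k))))); [intro; apply norm_sub_sym|].
    apply (cv_subseq (fun n => norm (vsub (X n) (Pr n)))); auto. apply residual_cv0. }
  destruct Pr_bounded as [MR HMR].
  apply (weak_lsc hc f (fun k => Pr (phi k)) xb _
    (fun k => - inner (vsub y (Pr (phi k))) (W (phi k)) + inner (vsub xb (Pr (phi k))) (B y)));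
    auto.
  - rewrite <- (Rplus_0_r 0) at 1. apply CV_plus.
    + apply (cv0_dominated _ (fun k => (norm y + MR) * norm (W (phi k))) 0).
      * intros k _. rewrite Rabs_Ropp. eapply Rle_trans; [apply cauchy_schwarz|].
        apply Rmult_le_compat_r; [apply norm_pos|].
        pose proof (norm_sub_triangle y (Pr (phi k))). specialize (HMR (phi k)). lra.
      * rewrite <- (Rmult_0_r (norm y + MR)). apply cv_scal.
        apply (cv_subseq (fun n => norm (W n))); auto. apply W_cv0.
    + apply (cv_ext (fun k => inner xb (B y) - inner (Pr (phi k)) (B y)));
        [intro; rewrite inner_sub_l; auto|].
      rewrite <- (Rminus_diag (inner xb (B y))). apply CV_minus; [apply cv_const|apply HwPr].
  - intro k. set (n := phi k).
    destruct (U_subdiff n) as [HfPr HU]. specialize (HU y). rewrite Hfy in HU.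
    destruct (f (Pr n)) as [fr|]; [|contradiction]. simpl in *.
    pose proof (HBm y (Pr n)) as Hm. rewrite inner_sym, inner_sub_r in Hm.
    unfold W. rewrite inner_add_r.
    assert (inner (vsub y xb) (B y) + inner (vsub xb (Pr n)) (B y) = inner (vsub y (Pr n)) (B y))
      by (rewrite !inner_sub_l; ring).
    lra.
Qed.

(** Demiclosedness: every weak cluster point of X is a zero of  df + B.
    Apply Minty's inequality at  y_t = t y + (1 - t) xb  and let t -> 0,
    using convexity of f and continuity of B. *)
Lemma weak_cluster_zero phi xb : sincr phi -> weak_cv (fun k => X (phi k)) xb -> Zer xb.
Proof.
  intros Hphi Hw. pose proof (minty_limit phi xb Hphi Hw) as Hm.
  destruct hz as [z0 [Hz0 _]].
  destruct (f z0) as [fz0|] eqn:Ez0; [|contradiction].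
  specialize (Hm z0 fz0 Ez0) as Hfx.
  destruct (f xb) as [fx|] eqn:Efx; [|contradiction].
  unfold Zer, subdiff. rewrite Efx.
  split; [discriminate|].
  intro y. destruct (f y) as [fy|] eqn:Efy; [|simpl; auto]. simpl.
  rewrite inner_opp_r.
  assert (fx - fy - inner (vsub y xb) (B xb) <= 0); [|lra].
  apply (nonpos_of_small_multiples _ (chi * inner (vsub y xb) (vsub y xb)));
    [apply Rmult_le_pos; [lra|apply inner_pos]|].
  intros t Ht. set (yt := vadd (vscal t y) (vscal (1 - t) xb)).
  assert (Hyt : vsub yt xb = vscal t (vsub y xb)) by (unfold yt; vec_eq).
  pose proof (hfc y xb t Ht) as Hc. rewrite Efy, Efx in Hc. fold yt in Hc.
  destruct (f yt) as [fyt|] eqn:Efyt; [|contradiction]. simpl in Hc.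
  specialize (Hm yt fyt Efyt). simpl in Hm.
  rewrite Hyt, inner_scal_l in Hm.
  (* Lipschitz continuity of B:  <y - xb, B yt - B xb> <= t chi |y - xb|^2 *)
  assert (HB1 : inner (vsub y xb) (B yt)
                  <= inner (vsub y xb) (B xb) + t * chi * inner (vsub y xb) (vsub y xb)).
  { replace (inner (vsub y xb) (B yt))
      with (inner (vsub y xb) (B xb) + inner (vsub y xb) (vsub (B yt) (B xb)))
      by (rewrite inner_sub_r; ring).
    pose proof (cauchy_schwarz_le (vsub y xb) (vsub (B yt) (B xb))).
    pose proof (HBl yt xb) as HL. rewrite Hyt, norm_scal, Rabs_pos_eq in HL by lra.
    rewrite <- norm_mul_self. pose proof (norm_pos (vsub y xb)).
    assert (norm (vsub y xb) * norm (vsub (B yt) (B xb))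
              <= norm (vsub y xb) * (chi * (t * norm (vsub y xb))))
      by (apply Rmult_le_compat_l; auto).
    nra. }
  assert (t * (fx - fy - inner (vsub y xb) (B xb))
            <= t * (t * (chi * inner (vsub y xb) (vsub y xb)))) by nra.
  apply Rmult_le_reg_l with t; lra.
Qed.

(** Opial's argument: two weak cluster points that are zeros coincide,
    since  |X n - z|  converges for every zero z. *)
Lemma opial_unique phi psi x1 x2 : sincr phi -> sincr psi ->
  weak_cv (fun k => X (phi k)) x1 -> weak_cv (fun k => X (psi k)) x2 ->
  Zer x1 -> Zer x2 -> x1 = x2.
Proof.
  intros Hphi Hpsi Hw1 Hw2 Hz1 Hz2.
  destruct (dist_cv x1 Hz1) as [l1 Hl1]. destruct (dist_cv x2 Hz2) as [l2 Hl2].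
  set (v := fun n => inner (X n) (vsub x1 x2)).
  set (lam := (l2 * l2 - l1 * l1 - inner x2 x2 + inner x1 x1) / 2).
  (* <X n, x1 - x2> converges, being a combination of squared distances *)
  assert (Hv : Un_cv v lam).
  { apply (cv_ext (fun n => (norm (vsub (X n) x2) * norm (vsub (X n) x2)
        - norm (vsub (X n) x1) * norm (vsub (X n) x1) - inner x2 x2 + inner x1 x1) / 2)).
    - intro n. rewrite !norm_mul_self. unfold v. inner_simpl.
      rewrite (inner_sym x1 (X n)), (inner_sym x2 (X n)). field.
    - unfold lam, Rdiv. apply CV_mult; [|apply cv_const].
      apply CV_plus; [apply CV_minus; [apply CV_minus; apply CV_mult; auto|apply cv_const]|].
      apply cv_const. }
  assert (E1 : lam = inner x1 (vsub x1 x2)).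
  { apply (UL_sequence (fun k => v (phi k))); [apply (cv_subseq v); auto|]. apply Hw1. }
  assert (E2 : lam = inner x2 (vsub x1 x2)).
  { apply (UL_sequence (fun k => v (psi k))); [apply (cv_subseq v); auto|]. apply Hw2. }
  apply vsub_eq0, inner_def. rewrite inner_sub_l. lra.
Qed.

Theorem tseng_weak_cv : exists xb, Zer xb /\ weak_cv X xb /\ weak_cv P xb.
Proof.
  destruct X_bounded as [M HM].
  destruct (weak_compact hc X M HM) as [phi [xb [Hphi Hw]]].
  assert (Hz : Zer xb) by (apply (weak_cluster_zero phi); auto).
  assert (HX : weak_cv X xb).
  { apply (weak_cv_of_cluster_points hc X M xb HM).
    intros psi x2 Hpsi Hw2. symmetry.
    apply (opial_unique phi psi); auto. apply (weak_cluster_zero psi); auto. }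
  exists xb; split; [exact Hz|split; [exact HX|]].
  (* P n - X n = b n - (X n - Pr n) -> 0 *)
  apply (weak_cv_close X); auto.
  apply (cv0_dominated _ (fun n => norm (b n) + norm (vsub (X n) (Pr n))) 0).
  - intros n _. rewrite Rabs_pos_eq by apply norm_pos.
    replace (vsub (P n) (X n)) with (vsub (b n) (vsub (X n) (Pr n))) by (unfold Pr; vec_eq).
    apply norm_sub_triangle.
  - rewrite <- (Rplus_0_r 0). apply CV_plus; [apply summable_terms; auto|apply residual_cv0].
Qed.

End Tseng.

(** * The product space H1 (+) H2 *)

Section Product.
Context {E F : IPS}.

Lemma inner_pair (a c : E) (b d : F) :
  @inner (prodIPS E F) (a, b) (c, d) = inner a c + inner b d.
Proof. reflexivity. Qed.
Lemma vsub_pair (a c : E) (b d : F) : @vsub (prodIPS E F) (a, b) (c, d) = (vsub a c, vsub b d).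
Proof. reflexivity. Qed.
Lemma vadd_pair (a c : E) (b d : F) : @vadd (prodIPS E F) (a, b) (c, d) = (vadd a c, vadd b d).
Proof. reflexivity. Qed.
Lemma vscal_pair t (a : E) (b : F) : @vscal (prodIPS E F) t (a, b) = (vscal t a, vscal t b).
Proof. reflexivity. Qed.
Lemma vopp_pair (a : E) (b : F) : @vopp (prodIPS E F) (a, b) = (vopp a, vopp b).
Proof. reflexivity. Qed.

Lemma norm_fst_le (a : E) (b : F) : norm a <= @norm (prodIPS E F) (a, b).
Proof. unfold norm. apply sqrt_le_1_alt. rewrite inner_pair. pose proof (inner_pos b); lra. Qed.

Lemma norm_snd_le (a : E) (b : F) : norm b <= @norm (prodIPS E F) (a, b).
Proof. unfold norm. apply sqrt_le_1_alt. rewrite inner_pair. pose proof (inner_pos a); lra. Qed.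

Lemma norm_pair_le (a : E) (b : F) : @norm (prodIPS E F) (a, b) <= norm a + norm b.
Proof.
  pose proof (norm_pos a). pose proof (norm_pos b).
  apply norm_le_sq; [lra|]. rewrite inner_pair, <- (norm_mul_self a), <- (norm_mul_self b). nra.
Qed.

Lemma prod_complete : complete E -> complete F -> complete (prodIPS E F).
Proof.
  intros H1 H2 u Hu.
  destruct (H1 (fun n => fst (u n))) as [l1 Hl1].
  { intros e He. destruct (Hu e He) as [N HN]. exists N. intros m n Hm Hn.
    specialize (HN m n Hm Hn). destruct (u m), (u n). cbn [fst snd].
    rewrite vsub_pair in HN. eapply Rle_lt_trans; [apply norm_fst_le|]. exact HN. }
  destruct (H2 (fun n => snd (u n))) as [l2 Hl2].
  { intros e He. destruct (Hu e He) as [N HN]. exists N. intros m n Hm Hn.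
    specialize (HN m n Hm Hn). destruct (u m), (u n). cbn [fst snd].
    rewrite vsub_pair in HN. eapply Rle_lt_trans; [apply norm_snd_le|]. exact HN. }
  exists (l1, l2). unfold strong_cv.
  apply (cv0_dominated _ (fun n => norm (vsub (fst (u n)) l1) + norm (vsub (snd (u n)) l2)) 0).
  - intros n _. rewrite Rabs_pos_eq by apply norm_pos. destruct (u n); cbn [fst snd].
    rewrite vsub_pair. apply norm_pair_le.
  - rewrite <- (Rplus_0_r 0). apply CV_plus; auto.
Qed.

Lemma abs_summable_pair (u : nat -> E) (v : nat -> F) :
  abs_summable u -> abs_summable v -> @abs_summable (prodIPS E F) (fun n => (u n, v n)).
Proof.
  intros Hu Hv. apply (summable_le _ (fun n => norm (u n) + norm (v n))).
  - intro n; split; [apply norm_pos|apply norm_pair_le].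
  - apply summable_plus; auto.
Qed.

Lemma weak_cv_fst (u : nat -> E) (v : nat -> F) l1 l2 :
  @weak_cv (prodIPS E F) (fun n => (u n, v n)) (l1, l2) -> weak_cv u l1.
Proof.
  intros H y. specialize (H (y, vzero)). rewrite inner_pair, inner_zero_r, Rplus_0_r in H.
  revert H; apply cv_ext; intro n. rewrite inner_pair, inner_zero_r; ring.
Qed.

Lemma weak_cv_snd (u : nat -> E) (v : nat -> F) l1 l2 :
  @weak_cv (prodIPS E F) (fun n => (u n, v n)) (l1, l2) -> weak_cv v l2.
Proof.
  intros H y. specialize (H (vzero, y)). rewrite inner_pair, inner_zero_r, Rplus_0_l in H.
  revert H; apply cv_ext; intro n. rewrite inner_pair, inner_zero_r; ring.
Qed.

End Product.

Lemma abs_summable_opp {E : IPS} (v : nat -> E) : abs_summable v -> abs_summable (fun n => vopp (v n)).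
Proof.
  intros [l Hl]; exists l. revert Hl; apply cv_ext.
  intro N; apply sum_eq; intros; rewrite norm_opp; auto.
Qed.

(** * The saddle operator of L *)

Section SaddleOperator.
Context {H1 H2 : IPS} (L : prodIPS H1 H2 -> R) (G : prodIPS H1 H2 -> prodIPS H1 H2)
  (hG : is_gradient L G).

Definition saddle_op (x : prodIPS H1 H2) : prodIPS H1 H2 := (fst (G x), vopp (snd (G x))).

Lemma frechet_partial_1 (x1 : H1) (x2 : H2) :
  frechet_at (fun y => L (y, x2)) x1 (fst (G (x1, x2))).
Proof.
  intros e He. destruct (hG (x1, x2) e He) as [dl [Hdl Hh]]. exists dl; split; auto.
  intros d Hd.
  assert (Hn : @norm (prodIPS H1 H2) (d, vzero) = norm d)
    by (unfold norm; rewrite inner_pair, inner_zero_l, Rplus_0_r; reflexivity).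
  specialize (Hh (d, vzero)). rewrite Hn in Hh. specialize (Hh Hd).
  destruct (G (x1, x2)) as [g1 g2].
  rewrite vadd_pair, vadd_0, inner_pair, inner_zero_r, Rplus_0_r in Hh. exact Hh.
Qed.

Lemma frechet_partial_2 (x1 : H1) (x2 : H2) :
  frechet_at (fun y => - L (x1, y)) x2 (vopp (snd (G (x1, x2)))).
Proof.
  intros e He. destruct (hG (x1, x2) e He) as [dl [Hdl Hh]]. exists dl; split; auto.
  intros d Hd.
  assert (Hn : @norm (prodIPS H1 H2) (vzero, d) = norm d)
    by (unfold norm; rewrite inner_pair, inner_zero_l, Rplus_0_l; reflexivity).
  specialize (Hh (vzero, d)). rewrite Hn in Hh. specialize (Hh Hd).
  destruct (G (x1, x2)) as [g1 g2].
  rewrite vadd_pair, vadd_0, inner_pair, inner_zero_r, Rplus_0_l in Hh.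
  rewrite inner_opp_l. cbn [snd].
  replace (- L (x1, vadd x2 d) - - L (x1, x2) - - inner g2 d)
    with (- (L (x1, vadd x2 d) - L (x1, x2) - inner g2 d)) by ring.
  rewrite Rabs_Ropp. exact Hh.
Qed.

Context (hconv : forall x2 : H2, convex_real (fun x1 : H1 => L (x1, x2)))
  (hconc : forall x1 : H1, convex_real (fun x2 : H2 => - L (x1, x2))).

Lemma gradient_ineq_1 (u1 v1 : H1) (u2 : H2) :
  L (u1, u2) + inner (fst (G (u1, u2))) (vsub v1 u1) <= L (v1, u2).
Proof. apply (grad_ineq (fun y => L (y, u2))); [apply hconv|apply frechet_partial_1]. Qed.

Lemma gradient_ineq_2 (u1 : H1) (u2 v2 : H2) :
  - L (u1, u2) + inner (vopp (snd (G (u1, u2)))) (vsub v2 u2) <= - L (u1, v2).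
Proof. apply (grad_ineq (fun y => - L (u1, y))); [apply hconc|apply frechet_partial_2]. Qed.

(** Convexity in x1 and concavity in x2 make the saddle operator monotone. *)
Lemma saddle_op_monotone : monotone_op saddle_op.
Proof.
  intros [u1 u2] [v1 v2]. unfold saddle_op. cbn [fst snd]. rewrite !vsub_pair, inner_pair.
  pose proof (gradient_ineq_1 u1 v1 u2). pose proof (gradient_ineq_1 v1 u1 v2).
  pose proof (gradient_ineq_2 u1 u2 v2). pose proof (gradient_ineq_2 v1 v2 u2).
  inner_simpl_in H. inner_simpl_in H0. inner_simpl_in H3. inner_simpl_in H4. inner_simpl. lra.
Qed.

Lemma saddle_point_of_zero (f : prodIPS H1 H2 -> ereal) (xb1 : H1) (xb2 : H2) :
  Zer f saddle_op (xb1, xb2) ->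
  (forall x : H1,
     ele (eaddr (f (xb1, xb2)) (L (xb1, xb2))) (eaddr (f (x, xb2)) (L (x, xb2)))) /\
  (forall x : H2,
     ele (eaddr (f (xb1, xb2)) (- L (xb1, xb2))) (eaddr (f (xb1, x)) (- L (xb1, x)))).
Proof.
  unfold Zer, subdiff, saddle_op. cbn [fst snd]. rewrite vopp_pair. intros [Hfin Hsub].
  destruct (f (xb1, xb2)) as [fx|] eqn:Efx; [|congruence].
  split.
  - intro x. specialize (Hsub (x, xb2)). pose proof (gradient_ineq_1 xb1 x xb2) as Hg.
    destruct (f (x, xb2)) as [fy|]; [|cbn; auto]. cbn [ele eaddr] in Hsub |- *.
    rewrite vsub_pair, inner_pair in Hsub. inner_simpl_in Hsub. inner_simpl_in Hg.
    rewrite (inner_sym (fst (G (xb1, xb2))) x), (inner_sym (fst (G (xb1, xb2))) xb1) in Hg. lra.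
  - intro x. specialize (Hsub (xb1, x)). pose proof (gradient_ineq_2 xb1 xb2 x) as Hg.
    destruct (f (xb1, x)) as [fy|]; [|cbn; auto]. cbn [ele eaddr] in Hsub |- *.
    rewrite vsub_pair, inner_pair in Hsub. inner_simpl_in Hsub. inner_simpl_in Hg.
    rewrite (inner_sym (snd (G (xb1, xb2))) x), (inner_sym (snd (G (xb1, xb2))) xb2) in Hg. lra.
Qed.

End SaddleOperator.

Lemma saddle_op_lipschitz {H1 H2 : IPS} (G : prodIPS H1 H2 -> prodIPS H1 H2) chi :
  lipschitz chi G -> lipschitz chi (saddle_op G).
Proof.
  intros hGlip x y. eapply Rle_trans; [|apply hGlip]. right.
  unfold saddle_op. rewrite vsub_pair. destruct (G x) as [g1 g2], (G y) as [h1 h2].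
  cbn [fst snd]. unfold norm. rewrite vsub_pair, !inner_pair. f_equal. f_equal. inner_simpl. ring.
Qed.

(** * The scheme of Proposition 4.2 is Tseng's scheme for  df + saddle_op G *)

Section Reduction.
Context {H1 H2 : IPS} (G : prodIPS H1 H2 -> prodIPS H1 H2) (gamma : nat -> R)
  (a1 c1 x1 y1 p1 q1 : nat -> H1) (a2 c2 x2 y2 p2 q2 : nat -> H2).

(** The iterates, and the errors as seen by the saddle operator. *)
Let X n : prodIPS H1 H2 := (x1 n, x2 n).
Let P n : prodIPS H1 H2 := (p1 n, p2 n).
Let a n : prodIPS H1 H2 := (a1 n, vopp (a2 n)).
Let c n : prodIPS H1 H2 := (c1 n, vopp (c2 n)).

Lemma forward_step_pair
  (hy1 : forall n, y1 n = vsub (x1 n) (vscal (gamma n) (vadd (fst (G (x1 n, x2 n))) (a1 n))))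
  (hy2 : forall n, y2 n = vadd (x2 n) (vscal (gamma n) (vadd (snd (G (x1 n, x2 n))) (a2 n))))
  n : Y (saddle_op G) gamma a X n = (y1 n, y2 n).
Proof.
  unfold Y, X, a, saddle_op. rewrite hy1, hy2.
  destruct (G (x1 n, x2 n)) as [g1 g2]. cbn [fst snd].
  rewrite vadd_pair, vscal_pair, vsub_pair. f_equal. vec_eq.
Qed.

Lemma update_step_pair
  (hq1 : forall n, q1 n = vsub (p1 n) (vscal (gamma n) (vadd (fst (G (p1 n, p2 n))) (c1 n))))
  (hq2 : forall n, q2 n = vadd (p2 n) (vscal (gamma n) (vadd (snd (G (p1 n, p2 n))) (c2 n))))
  (hx1 : forall n, x1 (S n) = vadd (vsub (x1 n) (y1 n)) (q1 n))
  (hx2 : forall n, x2 (S n) = vadd (vsub (x2 n) (y2 n)) (q2 n))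
  n : X (S n) = vadd (vsub (X n) (y1 n, y2 n)) (Q (saddle_op G) gamma c P n).
Proof.
  unfold Q, X, P, c, saddle_op. rewrite hx1, hx2, hq1, hq2.
  destruct (G (p1 n, p2 n)) as [g1 g2]. cbn [fst snd].
  rewrite vadd_pair, vscal_pair, !vsub_pair, vadd_pair. f_equal. vec_eq.
Qed.

End Reduction.

(** By the two lemmas above the iteration is Tseng's scheme
    in the product space for the monotone, chi-Lipschitz saddle operator;
    its weak limit is a zero of  df + saddle_op G, i.e. a saddle point. *)
Theorem proposition4p2
  (H1 H2 : Hilbert) (chi : R) (hchi : 0 < chi)
  (f : prodIPS H1 H2 -> ereal) (hf : Gamma0 f)
  (L : prodIPS H1 H2 -> R) (G : prodIPS H1 H2 -> prodIPS H1 H2)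
  (hG : is_gradient L G) (hGlip : lipschitz chi G)
  (hconc : forall x1 : H1, convex_real (fun x2 : H2 => - L (x1, x2)))
  (hconv : forall x2 : H2, convex_real (fun x1 : H1 => L (x1, x2)))
  (hz : exists (z1 : H1) (z2 : H2),
      subdiff f (z1, z2) (vopp (fst (G (z1, z2))), snd (G (z1, z2))))
  (eps : R) (heps : 0 < eps < 1 / (chi + 1))
  (gamma : nat -> R) (hgamma : forall n, eps <= gamma n <= (1 - eps) / chi)
  (a1 b1 c1 : nat -> H1) (a2 b2 c2 : nat -> H2)
  (ha1 : abs_summable a1) (hb1 : abs_summable b1) (hc1 : abs_summable c1)
  (ha2 : abs_summable a2) (hb2 : abs_summable b2) (hc2 : abs_summable c2)
  (x1 y1 p1 q1 : nat -> H1) (x2 y2 p2 q2 : nat -> H2)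
  (hy1 : forall n, y1 n = vsub (x1 n)
           (vscal (gamma n) (vadd (fst (G (x1 n, x2 n))) (a1 n))))
  (hy2 : forall n, y2 n = vadd (x2 n)
           (vscal (gamma n) (vadd (snd (G (x1 n, x2 n))) (a2 n))))
  (hp : forall n, is_prox (gamma n) f (y1 n, y2 n)
           (vsub (p1 n) (b1 n), vsub (p2 n) (b2 n)))
  (hq1 : forall n, q1 n = vsub (p1 n)
           (vscal (gamma n) (vadd (fst (G (p1 n, p2 n))) (c1 n))))
  (hq2 : forall n, q2 n = vadd (p2 n)
           (vscal (gamma n) (vadd (snd (G (p1 n, p2 n))) (c2 n))))
  (hx1 : forall n, x1 (S n) = vadd (vsub (x1 n) (y1 n)) (q1 n))
  (hx2 : forall n, x2 (S n) = vadd (vsub (x2 n) (y2 n)) (q2 n)) :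
  exists (xb1 : H1) (xb2 : H2),
    (forall x : H1,
       ele (eaddr (f (xb1, xb2)) (L (xb1, xb2))) (eaddr (f (x, xb2)) (L (x, xb2)))) /\
    (forall x : H2,
       ele (eaddr (f (xb1, xb2)) (- L (xb1, xb2))) (eaddr (f (xb1, x)) (- L (xb1, x)))) /\
    weak_cv x1 xb1 /\ weak_cv p1 xb1 /\ weak_cv x2 xb2 /\ weak_cv p2 xb2.
Proof.
  destruct hf as [hfp [hfc hfl]].
  assert (hzero : exists z, Zer f (saddle_op G) z).
  { destruct hz as [z1 [z2 Hz]]. exists (z1, z2). unfold Zer, saddle_op.
    rewrite vopp_pair. replace (vopp (vopp (snd (G (z1, z2))))) with (snd (G (z1, z2))) by vec_eq.
    exact Hz. }
  pose proof (forward_step_pair G gamma a1 x1 y1 a2 x2 y2 hy1 hy2) as HY.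
  destruct (tseng_weak_cv (prod_complete (hcomplete H1) (hcomplete H2)) f hfp hfc hfl
     (saddle_op G) chi hchi (saddle_op_lipschitz G chi hGlip)
     (saddle_op_monotone L G hG hconv hconc) eps heps gamma hgamma
     _ _ _ (abs_summable_pair _ _ ha1 (abs_summable_opp _ ha2)) (abs_summable_pair _ _ hb1 hb2)
     (abs_summable_pair _ _ hc1 (abs_summable_opp _ hc2))
     (fun n => (x1 n, x2 n)) (fun n => (p1 n, p2 n)) hzero)
    as [[xb1 xb2] [Hz [HwX HwP]]].
  - intro n. rewrite HY. exact (hp n).
  - intro n. rewrite HY. exact (update_step_pair G gamma c1 x1 y1 p1 q1 c2 x2 y2 p2 q2
                                  hq1 hq2 hx1 hx2 n).
  - exists xb1, xb2.
    destruct (saddle_point_of_zero L G hG hconv hconc f xb1 xb2 Hz) as [Hmin1 Hmin2].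
    repeat split; auto.
    + exact (weak_cv_fst _ _ _ _ HwX).
    + exact (weak_cv_fst _ _ _ _ HwP).
    + exact (weak_cv_snd _ _ _ _ HwX).
    + exact (weak_cv_snd _ _ _ _ HwP).
Qed.
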